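(* For $\omega>0$ small, $\int Y_0=\tfrac{32}{9}\omega+O(\omega^2)$, where $Y_0=\tfrac12(K_2''-K_1'-2yK_0')$.
   Context: Let $Q_\omega(y)=\sqrt{4/(1+a_\omega\cosh 2y)}$, $a_\omega=\sqrt{1+\tfrac{16}{3}\omega}$, $M_+=-\partial_y^2+1+\tfrac{\omega}{3}Q_\omega^4$, $M_-=-\partial_y^2+1-\omega Q_\omega^4$. For small $\omega>0$, $\alpha=\alpha(\omega)>0$ is smooth with $\alpha=\tfrac89\omega+O(\omega^2)$, $\lambda=1-\alpha^2$, $\kappa=\sqrt{2-\alpha^2}$, and $W_1,W_2$ are smooth real functions, even in $y$, with $M_+W_1=\lambda W_2$, $M_-W_2=\lambda W_1$, and for $j=1,2$, $k\ge0$: $|\partial_y^kW_j|\lesssim\omega^ke^{-\alpha|y|}+\omega e^{-|y|}$, $|\partial_y^k(W_1-W_2)|\lesssim\omega e^{-\kappa|y|}$, $|W_j-e^{-\alpha|y|}|\lesssim\omega e^{-\alpha|y|}$ ($\lesssim$ with constants independent of $\omega,y$). With $U=\partial_y-W_2'/W_2$, $K_2,K_1,K_0$ are the smooth coefficients of the fourth-order operator $K=\partial_y^4-2\partial_y^2+K_2\partial_y^2+K_1\partial_y+K_0+1$ determined by $UM_+M_-=KU$; they satisfy $|\partial_y^kK_i|\lesssim\omega e^{-(\kappa-\alpha)|y|}$. *)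

From Stdlib Require Import Reals.
From Coquelicot Require Import Coquelicot.
Open Scope R_scope.

Definition cosh_ (x : R) : R := (exp x + exp (- x)) / 2.

Definition smooth (f : R -> R) : Prop :=
  forall (n : nat) (x : R), ex_derive (Derive_n f n) x.

Definition smooth_on (a b : R) (f : R -> R) : Prop :=
  forall (n : nat) (x : R), a < x < b -> ex_derive (Derive_n f n) x.

Definition a_om (om : R) : R := sqrt (1 + 16 / 3 * om).
Definition Q_om (om y : R) : R := sqrt (4 / (1 + a_om om * cosh_ (2 * y))).

Definition M_plus_op (om : R) (f : R -> R) : R -> R :=
  fun y => - Derive_n f 2 y + f y + om / 3 * (Q_om om y) ^ 4 * f y.
Definition M_minus_op (om : R) (f : R -> R) : R -> R :=
  fun y => - Derive_n f 2 y + f y - om * (Q_om om y) ^ 4 * f y.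

Definition Uop (W2 : R -> R) (f : R -> R) : R -> R :=
  fun y => Derive f y - Derive W2 y / W2 y * f y.

Definition Kop (K2 K1 K0 : R -> R) (g : R -> R) : R -> R :=
  fun y => Derive_n g 4 y - 2 * Derive_n g 2 y + K2 y * Derive_n g 2 y
           + K1 y * Derive g y + K0 y * g y + g y.

Definition Y0 (K2 K1 K0 : R -> R) : R -> R :=
  fun y => / 2 * (Derive_n K2 2 y - Derive K1 y - 2 * y * Derive K0 y).

(* Testing the intertwining relation [U M_+ M_- = K U] on [f = 1] and [f = y] expresses
   [K0] through [K2], [K1], [w = W2'/W2] and [q = Q^4].  Substituted into [Y0] this gives
   [Y0 = G' - (2 om / 3) q|_(om=0) + R] with
   [G = K2'/2 - K1/2 - y K0 + 4 w'' - 4 w + 3 om q'] and [R = O(om^2 e^(-|y|))].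
   As [W2 ~ e^(-alpha |y|)], [w] tends to [-+ alpha] at [+-oo] while [K_i], [w'], [w''], [q']
   decay, so [G] tends to [+- 4 alpha] and [int G' = 8 alpha = 64/9 om + O(om^2)].
   Since [int q|_(om=0) = int 4 sech^4 = 16/3], [int Y0 = 64/9 om - 32/9 om + O(om^2)]. *)

From Stdlib Require Import Reals Lra Lia Psatz.
From Coquelicot Require Import Coquelicot.
Open Scope R_scope.

(** * Smooth functions *)

Lemma Derive_n_S_inner (f : R -> R) (k : nat) (x : R) :
  Derive_n f (S k) x = Derive_n (Derive f) k x.
Proof.
  revert x; induction k as [|k IH]; intros x; [reflexivity|].
  simpl. apply Derive_ext, IH.
Qed.

Definition ex_derive_upto (n : nat) (f : R -> R) : Prop :=
  forall k, (k <= n)%nat -> forall x, ex_derive (Derive_n f k) x.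

Lemma ex_derive_upto_S (n : nat) (f : R -> R) :
  ex_derive_upto (S n) f <-> (forall x, ex_derive f x) /\ ex_derive_upto n (Derive f).
Proof.
  split.
  - intros H. split; [intros x; apply (H 0%nat); lia|].
    intros k Hk x. apply ex_derive_ext with (Derive_n f (S k)).
    + intros t. apply Derive_n_S_inner.
    + apply H. lia.
  - intros [H0 H] [|k] Hk x; [apply H0|].
    apply ex_derive_ext with (Derive_n (Derive f) k).
    + intros t. symmetry. apply Derive_n_S_inner.
    + apply H. lia.
Qed.

Lemma ex_derive_upto_le (n m : nat) (f : R -> R) :
  (m <= n)%nat -> ex_derive_upto n f -> ex_derive_upto m f.
Proof. intros Hmn H k Hk x. apply H. lia. Qed.

Lemma ex_derive_upto_ext (n : nat) (f g : R -> R) :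
  (forall t, f t = g t) -> ex_derive_upto n f -> ex_derive_upto n g.
Proof.
  intros E H k Hk x. apply ex_derive_ext with (Derive_n f k).
  - intros t. apply Derive_n_ext, E.
  - apply H, Hk.
Qed.

Lemma ex_derive_upto_plus (n : nat) (f g : R -> R) :
  ex_derive_upto n f -> ex_derive_upto n g -> ex_derive_upto n (fun y => f y + g y).
Proof.
  intros Hf Hg k Hk x.
  apply ex_derive_ext with (fun y => Derive_n f k y + Derive_n g k y).
  - intros t. symmetry. apply Derive_n_plus.
    + apply filter_forall. intros y [|j] Hj; [exact I|]. apply Hf. lia.
    + apply filter_forall. intros y [|j] Hj; [exact I|]. apply Hg. lia.
  - apply (ex_derive_plus (Derive_n f k) (Derive_n g k)); auto.
Qed.

Lemma ex_derive_upto_scal (n : nat) (c : R) (f : R -> R) :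
  ex_derive_upto n f -> ex_derive_upto n (fun y => c * f y).
Proof.
  intros Hf k Hk x. apply ex_derive_ext with (fun y => c * Derive_n f k y).
  - intros t. symmetry. apply Derive_n_scal_l.
  - apply ex_derive_scal. auto.
Qed.

Lemma ex_derive_upto_mult (n : nat) (f g : R -> R) :
  ex_derive_upto n f -> ex_derive_upto n g -> ex_derive_upto n (fun y => f y * g y).
Proof.
  revert f g; induction n as [|n IH]; intros f g Hf Hg.
  - intros k Hk x. replace k with 0%nat by lia.
    apply ex_derive_mult; [apply (Hf 0%nat) | apply (Hg 0%nat)]; lia.
  - apply ex_derive_upto_S in Hf as Hf'; destruct Hf' as [Hf0 Hf1].
    apply ex_derive_upto_S in Hg as Hg'; destruct Hg' as [Hg0 Hg1].
    apply ex_derive_upto_S. split; [intros x; apply ex_derive_mult; auto|].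
    apply ex_derive_upto_ext with (fun y => Derive f y * g y + f y * Derive g y).
    + intros t. symmetry. apply Derive_mult; auto.
    + apply ex_derive_upto_plus; apply IH; auto;
        apply ex_derive_upto_le with (S n); auto.
Qed.

Lemma ex_derive_upto_inv (n : nat) (g : R -> R) :
  ex_derive_upto n g -> (forall y, g y <> 0) -> ex_derive_upto n (fun y => / g y).
Proof.
  revert g; induction n as [|n IH]; intros g Hg Hnz.
  - intros k Hk x. replace k with 0%nat by lia.
    apply ex_derive_inv; auto. apply (Hg 0%nat). lia.
  - apply ex_derive_upto_S in Hg as Hg'; destruct Hg' as [Hg0 Hg1].
    apply ex_derive_upto_S. split; [intros x; apply ex_derive_inv; auto|].
    apply ex_derive_upto_ext with (fun y => (-1) * Derive g y * (/ g y * / g y)).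
    + intros t. rewrite Derive_inv; auto. field. auto.
    + assert (Hinv : ex_derive_upto n (fun y => / g y))
        by (apply IH; auto; apply ex_derive_upto_le with (S n); auto).
      apply ex_derive_upto_mult; [apply ex_derive_upto_scal; auto|].
      apply ex_derive_upto_mult; auto.
Qed.

Lemma smooth_iff_upto (f : R -> R) : smooth f <-> forall n, ex_derive_upto n f.
Proof.
  split.
  - intros H n k _ x. apply H.
  - intros H n x. apply (H n n). lia.
Qed.

Lemma smooth_S (f : R -> R) :
  smooth f <-> (forall x, ex_derive f x) /\ smooth (Derive f).
Proof.
  rewrite !smooth_iff_upto. split.
  - intros H. split; [intros x; apply (H 0%nat 0%nat); lia|].
    intros n. apply (ex_derive_upto_S n f). auto.
  - intros [H0 H] [|n].
    + intros k Hk x. replace k with 0%nat by lia. auto.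
    + apply ex_derive_upto_S. auto.
Qed.

Lemma smooth_ext (f g : R -> R) : (forall t, f t = g t) -> smooth f -> smooth g.
Proof.
  rewrite !smooth_iff_upto. intros E H n. apply ex_derive_upto_ext with f; auto.
Qed.

Lemma smooth_plus (f g : R -> R) : smooth f -> smooth g -> smooth (fun y => f y + g y).
Proof. rewrite !smooth_iff_upto. intros; apply ex_derive_upto_plus; auto. Qed.

Lemma smooth_scal (c : R) (f : R -> R) : smooth f -> smooth (fun y => c * f y).
Proof. rewrite !smooth_iff_upto. intros; apply ex_derive_upto_scal; auto. Qed.

Lemma smooth_mult (f g : R -> R) : smooth f -> smooth g -> smooth (fun y => f y * g y).
Proof. rewrite !smooth_iff_upto. intros; apply ex_derive_upto_mult; auto. Qed.

Lemma smooth_inv (g : R -> R) : smooth g -> (forall y, g y <> 0) -> smooth (fun y => / g y).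
Proof. rewrite !smooth_iff_upto. intros; apply ex_derive_upto_inv; auto. Qed.

Lemma smooth_const (c : R) : smooth (fun _ => c).
Proof.
  intros [|n] x; [apply ex_derive_const|].
  apply ex_derive_ext with (fun _ => 0); [|apply ex_derive_const].
  intros t. symmetry. apply Derive_n_const.
Qed.

Lemma smooth_Derive (f : R -> R) : smooth f -> smooth (Derive f).
Proof. intros H. apply smooth_S in H. tauto. Qed.

Lemma smooth_Derive_n (f : R -> R) (k : nat) : smooth f -> smooth (Derive_n f k).
Proof.
  intros H n x. apply ex_derive_ext with (Derive_n f (n + k)); [|apply H].
  intros t. symmetry. apply Derive_n_comp.
Qed.

Lemma smooth_continuous (f : R -> R) (n : nat) (x : R) :
  smooth f -> continuous (Derive_n f n) x.
Proof. intros H. apply (ex_derive_continuous (Derive_n f n)), H. Qed.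

Lemma smooth_id : smooth (fun y => y).
Proof.
  apply smooth_S. split; [intros; apply ex_derive_id|].
  apply smooth_ext with (fun _ => 1); [|apply smooth_const].
  intros t. symmetry. apply Derive_id.
Qed.

Lemma smooth_exp_scal (c : R) : smooth (fun y => exp (c * y)).
Proof.
  assert (H : forall n x, Derive_n (fun y => exp (c * y)) n x = c ^ n * exp (c * x)).
  { induction n as [|n IH]; intros x; simpl; [ring|].
    rewrite (Derive_ext _ (fun y => c ^ n * exp (c * y))) by apply IH.
    apply is_derive_unique. auto_derive; auto. ring. }
  intros n x. apply ex_derive_ext with (fun y => c ^ n * exp (c * y)).
  - intros t. symmetry. apply H.
  - auto_derive. auto.
Qed.

Lemma Derive_n_id_mult (h : R -> R) (n : nat) (x : R) : smooth h ->
  Derive_n (fun y => y * h y) (S n) x = x * Derive_n h (S n) x + INR (S n) * Derive_n h n x.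
Proof.
  intros Hh. revert x; induction n as [|n IH]; intros x.
  - simpl. rewrite Derive_mult; [|apply ex_derive_id | apply (Hh 0%nat)].
    rewrite Derive_id. change (fun y => h y) with h. ring.
  - change (Derive (Derive_n (fun y => y * h y) (S n)) x
      = x * Derive_n h (S (S n)) x + INR (S (S n)) * Derive_n h (S n) x).
    rewrite (Derive_ext _ (fun y => y * Derive_n h (S n) y + INR (S n) * Derive_n h n y))
      by apply IH.
    rewrite Derive_plus, Derive_mult, Derive_scal, Derive_id.
    + change (Derive (Derive_n h ?k) x) with (Derive_n h (S k) x). rewrite !S_INR. ring.
    + apply ex_derive_id.
    + apply Hh.
    + apply ex_derive_mult; [apply ex_derive_id | apply Hh].
    + apply ex_derive_scal, Hh.
Qed.

Lemma Derive_n_const_plus (c : R) (f : R -> R) (n : nat) (x : R) :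
  Derive_n (fun y => c + f y) (S n) x = Derive_n f (S n) x.
Proof.
  revert x; induction n as [|n IH]; intros x.
  - simpl. unfold Derive. f_equal. apply Lim_ext. intros h. unfold Rdiv. f_equal. ring.
  - simpl. apply Derive_ext, IH.
Qed.

Lemma Derive_n_affine (c d : R) (f : R -> R) (n : nat) (x : R) :
  Derive_n (fun y => c + d * f y) (S n) x = d * Derive_n f (S n) x.
Proof. rewrite Derive_n_const_plus. apply Derive_n_scal_l. Qed.

Definition log_deriv (f : R -> R) : R -> R := fun y => Derive f y / f y.

Lemma smooth_log_deriv (f : R -> R) : smooth f -> (forall y, f y <> 0) -> smooth (log_deriv f).
Proof.
  intros Hf Hnz. unfold log_deriv, Rdiv.
  apply smooth_mult; [apply smooth_Derive, Hf | apply smooth_inv; auto].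
Qed.

(** * Exponential bounds, limits and improper integrals *)

Lemma exp_le (x y : R) : x <= y -> exp x <= exp y.
Proof. intros [H|H]; [left; apply exp_increasing, H | subst; lra]. Qed.

Lemma exp_neg_abs_le (c1 c2 y : R) : c1 <= c2 -> exp (- c2 * Rabs y) <= exp (- c1 * Rabs y).
Proof. intros H. apply exp_le. pose proof (Rabs_pos y). nra. Qed.

Lemma exp_neg_4abs_le (y : R) : exp (- (4) * Rabs y) <= exp (- Rabs y).
Proof. apply exp_le. pose proof (Rabs_pos y). lra. Qed.

Lemma exp_neg_abs_le_1 (c y : R) : 0 <= c -> exp (- c * Rabs y) <= 1.
Proof. intros H. rewrite <- exp_0. apply exp_le. pose proof (Rabs_pos y). nra. Qed.

Lemma exp_neg_abs_sqr (k y : R) : exp (- k * Rabs y) ^ 2 = exp (- (2 * k) * Rabs y).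
Proof. simpl. rewrite Rmult_1_r, <- exp_plus. f_equal. ring. Qed.

Lemma abs_mul_exp_neg_abs_le (y : R) : Rabs y * exp (- Rabs y) <= 2 * exp (- / 2 * Rabs y).
Proof.
  pose proof (exp_ineq1_le (/ 2 * Rabs y)). pose proof (Rabs_pos y).
  pose proof (exp_pos (- / 2 * Rabs y)).
  assert (E : exp (- Rabs y) = exp (- / 2 * Rabs y) * exp (- / 2 * Rabs y))
    by (rewrite <- exp_plus; f_equal; field).
  assert (E2 : exp (/ 2 * Rabs y) * exp (- / 2 * Rabs y) = 1)
    by (rewrite <- exp_plus, <- exp_0; f_equal; ring).
  rewrite E. nra.
Qed.

Lemma Rabs_mult_le (x y u v : R) : Rabs x <= u -> Rabs y <= v -> Rabs (x * y) <= u * v.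
Proof. intros Hx Hy. rewrite Rabs_mult. apply Rmult_le_compat; auto using Rabs_pos. Qed.

(* The constant [7/8] is the one of the lower bound [W2_between] on the divisor [W2]. *)
Lemma Rabs_div_le (X W B e : R) : 0 < e -> 7 / 8 * e <= W -> Rabs X <= B * e ->
  Rabs (X / W) <= 8 / 7 * B.
Proof.
  intros He HW HX. assert (0 < W) by lra. unfold Rdiv.
  rewrite Rabs_mult, Rabs_inv, (Rabs_right W) by lra.
  apply Rmult_le_reg_r with W; [lra|]. rewrite Rmult_assoc, Rinv_l, Rmult_1_r by lra.
  assert (0 <= B) by (pose proof (Rabs_pos X); nra). nra.
Qed.

Lemma coef_nonneg_of_bound (X c P : R) : Rabs X <= c * P -> 0 < P -> 0 <= c.
Proof.
  intros H HP. destruct (Rle_lt_dec 0 c) as [|Hc]; [assumption|].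
  pose proof (Rabs_pos X). nra.
Qed.

Lemma ball_Rabs (l : R) (eps : posreal) (y : R) : ball l eps y <-> Rabs (y - l) < eps.
Proof. reflexivity. Qed.

Lemma exp_decay_eventually_lt (K c eps : R) : 0 < c -> 0 < eps ->
  exists X, forall x, X <= x -> K * exp (- c * x) < eps.
Proof.
  intros Hc Heps. exists (Rabs K / (c * eps)). intros x Hx.
  assert (Hcx : Rabs K / eps <= c * x).
  { apply Rmult_le_reg_r with (/ c); [apply Rinv_0_lt_compat; lra|].
    replace (c * x * / c) with x by (field; lra).
    replace (Rabs K / eps * / c) with (Rabs K / (c * eps)) by (field; lra). exact Hx. }
  pose proof (exp_ineq1_le (c * x)) as Hexp.
  assert (Hinv : exp (- c * x) * exp (c * x) = 1)
    by (rewrite <- exp_plus, <- exp_0; f_equal; ring).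
  pose proof (exp_pos (- c * x)). pose proof (Rle_abs K).
  assert (Rabs K <= eps * (c * x)).
  { apply Rmult_le_reg_r with (/ eps); [apply Rinv_0_lt_compat; lra|].
    replace (eps * (c * x) * / eps) with (c * x) by (field; lra). exact Hcx. }
  set (e := exp (- c * x)) in *.
  apply Rle_lt_trans with (eps * (c * x) * e); [nra|].
  apply Rlt_le_trans with (eps * (1 + c * x) * e); [nra|].
  apply Rle_trans with (eps * (exp (c * x) * e)).
  { rewrite Rmult_assoc. apply Rmult_le_compat_l; [lra|]. apply Rmult_le_compat_r; lra. }
  rewrite Rmult_comm in Hinv. rewrite Hinv. lra.
Qed.

Lemma filterlim_pinfty_of_exp_bound (f : R -> R) (l M c : R) : 0 < c ->
  (forall y, 0 <= y -> Rabs (f y - l) <= M * exp (- c * y)) ->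
  filterlim f (Rbar_locally p_infty) (locally l).
Proof.
  intros Hc H. apply filterlim_locally. intros eps.
  destruct (exp_decay_eventually_lt M c eps Hc (cond_pos eps)) as [X HX].
  exists (Rmax 0 X). intros x Hx. apply ball_Rabs.
  pose proof (Rmax_l 0 X). pose proof (Rmax_r 0 X).
  eapply Rle_lt_trans; [apply H | apply HX]; lra.
Qed.

Lemma filterlim_minfty_of_exp_bound (f : R -> R) (l M c : R) : 0 < c ->
  (forall y, y <= 0 -> Rabs (f y - l) <= M * exp (c * y)) ->
  filterlim f (Rbar_locally m_infty) (locally l).
Proof.
  intros Hc H. apply filterlim_locally. intros eps.
  destruct (exp_decay_eventually_lt M c eps Hc (cond_pos eps)) as [X HX].
  exists (Rmin 0 (- X)). intros x Hx. apply ball_Rabs.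
  pose proof (Rmin_l 0 (- X)). pose proof (Rmin_r 0 (- X)).
  eapply Rle_lt_trans; [apply H; lra|].
  replace (c * x) with (- c * - x) by ring. apply HX. lra.
Qed.

Lemma filterlim_abs_le {F : (R -> Prop) -> Prop} {FF : ProperFilter F}
  (f : R -> R) (l K : R) :
  filterlim f F (locally l) -> F (fun x => Rabs (f x) <= K) -> Rabs l <= K.
Proof.
  intros Hf HK. destruct (Rle_lt_dec (Rabs l) K) as [|Hlt]; [assumption|].
  assert (Heps : 0 < Rabs l - K) by lra.
  pose proof (proj1 (filterlim_locally f l) Hf (mkposreal _ Heps)) as Hball.
  destruct (filter_ex _ (filter_and _ _ HK Hball)) as [x [Hx Hbx]].
  apply ball_Rabs in Hbx. change (Rabs (f x - l) < Rabs l - K) in Hbx.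
  pose proof (Rabs_triang_inv l (f x)) as Htri. rewrite Rabs_minus_sym in Htri.
  lra.
Qed.

Lemma RInt_scal_exp (M c u v : R) : c <> 0 ->
  RInt (fun s => M * exp (c * s)) u v = M / c * (exp (c * v) - exp (c * u)).
Proof.
  intros Hc. apply is_RInt_unique.
  replace (M / c * (exp (c * v) - exp (c * u)))
    with (minus (M / c * exp (c * v)) (M / c * exp (c * u)))
      by (unfold minus, plus, opp; simpl; ring).
  apply (is_RInt_derive (fun s => M / c * exp (c * s))).
  - intros x _. auto_derive; auto. field. auto.
  - intros x _. apply (ex_derive_continuous (fun s => M * exp (c * s))). auto_derive. auto.
Qed.

Lemma abs_RInt_le_RInt (f g : R -> R) (u v : R) : u <= v ->
  (forall x, continuous f x) -> (forall x, continuous g x) ->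
  (forall x, u <= x <= v -> Rabs (f x) <= g x) -> Rabs (RInt f u v) <= RInt g u v.
Proof.
  intros Huv Hf Hg H.
  assert (Hex : forall h, (forall x, continuous h x) -> ex_RInt h u v)
    by (intros h Hh; apply (ex_RInt_continuous (V := R_CompleteNormedModule)); auto).
  eapply Rle_trans; [apply abs_RInt_le; auto|].
  apply RInt_le; auto.
  - apply Hex. intros x. apply (continuous_comp f Rabs); [apply Hf | apply continuous_Rabs].
  - intros x Hx. apply H. lra.
Qed.

Lemma abs_RInt_le_exp_right (f : R -> R) (M c u v : R) : 0 < c -> u <= v ->
  (forall x, continuous f x) -> (forall x, u <= x <= v -> Rabs (f x) <= M * exp (- c * x)) ->
  Rabs (RInt f u v) <= M / c * exp (- c * u).
Proof.
  intros Hc Huv Hf H.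
  assert (HM : 0 <= M).
  { specialize (H u ltac:(lra)). pose proof (Rabs_pos (f u)). pose proof (exp_pos (- c * u)). nra. }
  eapply Rle_trans.
  - apply (abs_RInt_le_RInt f (fun s => M * exp (- c * s))); auto.
    intros x. apply (ex_derive_continuous (fun s => M * exp (- c * s))). auto_derive. auto.
  - rewrite RInt_scal_exp by lra.
    pose proof (exp_pos (- c * v)). pose proof (exp_pos (- c * u)).
    replace (M / - c * (exp (- c * v) - exp (- c * u)))
      with (M / c * exp (- c * u) - M / c * exp (- c * v)) by (field; lra).
    assert (0 <= M / c) by (apply Rdiv_le_0_compat; lra). nra.
Qed.

Lemma abs_RInt_le_exp_left (f : R -> R) (M c u v : R) : 0 < c -> u <= v ->
  (forall x, continuous f x) -> (forall x, u <= x <= v -> Rabs (f x) <= M * exp (c * x)) ->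
  Rabs (RInt f u v) <= M / c * exp (c * v).
Proof.
  intros Hc Huv Hf H.
  assert (HM : 0 <= M).
  { specialize (H u ltac:(lra)). pose proof (Rabs_pos (f u)). pose proof (exp_pos (c * u)). nra. }
  eapply Rle_trans.
  - apply (abs_RInt_le_RInt f (fun s => M * exp (c * s))); auto.
    intros x. apply (ex_derive_continuous (fun s => M * exp (c * s))). auto_derive. auto.
  - rewrite RInt_scal_exp by lra.
    pose proof (exp_pos (c * v)). pose proof (exp_pos (c * u)).
    assert (0 <= M / c) by (apply Rdiv_le_0_compat; lra). nra.
Qed.

Section DecayingPrimitive.

Variables (f : R -> R) (M c : R).
Hypotheses (Hc : 0 < c) (Hf : forall x, continuous f x).

Let F x := RInt f 0 x.

Lemma ex_RInt_of_continuous (u v : R) : ex_RInt f u v.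
Proof. apply (ex_RInt_continuous (V := R_CompleteNormedModule)). intros; apply Hf. Qed.

Lemma primitive_sub (u v : R) : F v - F u = RInt f u v.
Proof.
  unfold F. rewrite <- (RInt_Chasles f 0 u v) by apply ex_RInt_of_continuous.
  unfold plus; simpl. ring.
Qed.

Lemma primitive_cvg_pinfty :
  (forall x, 0 <= x -> Rabs (f x) <= M * exp (- c * x)) ->
  exists lb, filterlim F (Rbar_locally p_infty) (locally lb) /\ Rabs lb <= M / c.
Proof.
  intros H.
  assert (Htail : forall u v, 0 <= u <= v -> Rabs (F v - F u) <= M / c * exp (- c * u)).
  { intros u v Huv. rewrite primitive_sub.
    apply abs_RInt_le_exp_right; auto; try lra. intros x Hx. apply H. lra. }
  assert (Hlim : exists lb, filterlim F (Rbar_locally p_infty) (locally lb)).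
  { apply (Hierarchy.filterlim_locally_cauchy F (F := Rbar_locally p_infty)). intros eps.
    destruct (exp_decay_eventually_lt (M / c) c eps Hc (cond_pos eps)) as [X HX].
    pose proof (Rmax_l 0 X). pose proof (Rmax_r 0 X).
    exists (fun x => Rmax 0 X < x). split; [exists (Rmax 0 X); auto|].
    assert (Hball : forall u v, Rmax 0 X < u -> u <= v -> ball (F u) eps (F v)).
    { intros u v Hu Huv. apply ball_Rabs.
      eapply Rle_lt_trans; [apply Htail; lra | apply HX; lra]. }
    intros u v Hu Hv. destruct (Rle_dec u v).
    - apply Hball; lra.
    - apply ball_sym, Hball; lra. }
  destruct Hlim as [lb Hlb]. exists lb. split; [exact Hlb|].
  apply (filterlim_abs_le F lb _ Hlb). exists 0. intros x Hx.
  replace (F x) with (F x - F 0) by (unfold F; rewrite RInt_point; unfold zero; simpl; ring).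
  rewrite <- (Rmult_1_r (M / c)), <- exp_0. replace 0 with (- c * 0) at 2 by ring.
  apply Htail. lra.
Qed.

Lemma primitive_cvg_minfty :
  (forall x, x <= 0 -> Rabs (f x) <= M * exp (c * x)) ->
  exists la, filterlim F (Rbar_locally m_infty) (locally la) /\ Rabs la <= M / c.
Proof.
  intros H.
  assert (Htail : forall u v, u <= v <= 0 -> Rabs (F v - F u) <= M / c * exp (c * v)).
  { intros u v Huv. rewrite primitive_sub.
    apply abs_RInt_le_exp_left; auto; try lra. intros x Hx. apply H. lra. }
  assert (Hlim : exists la, filterlim F (Rbar_locally m_infty) (locally la)).
  { apply (Hierarchy.filterlim_locally_cauchy F (F := Rbar_locally m_infty)). intros eps.
    destruct (exp_decay_eventually_lt (M / c) c eps Hc (cond_pos eps)) as [X HX].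
    pose proof (Rmin_l 0 (- X)). pose proof (Rmin_r 0 (- X)).
    exists (fun x => x < Rmin 0 (- X)). split; [exists (Rmin 0 (- X)); auto|].
    assert (Hball : forall u v, v < Rmin 0 (- X) -> u <= v -> ball (F u) eps (F v)).
    { intros u v Hv Huv. apply ball_Rabs.
      eapply Rle_lt_trans; [apply Htail; lra|].
      replace (c * v) with (- c * - v) by ring. apply HX. lra. }
    intros u v Hu Hv. destruct (Rle_dec u v).
    - apply Hball; lra.
    - apply ball_sym, Hball; lra. }
  destruct Hlim as [la Hla]. exists la. split; [exact Hla|].
  apply (filterlim_abs_le F la _ Hla). exists 0. intros x Hx.
  replace (F x) with (- (F 0 - F x)) by (unfold F; rewrite RInt_point; unfold zero; simpl; ring).
  rewrite Rabs_Ropp, <- (Rmult_1_r (M / c)), <- exp_0. replace 0 with (c * 0) at 2 by ring.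
  apply Htail. lra.
Qed.

Lemma is_RInt_gen_of_exp_bound :
  (forall x, Rabs (f x) <= M * exp (- c * Rabs x)) ->
  exists l, is_RInt_gen f (Rbar_locally m_infty) (Rbar_locally p_infty) l /\ Rabs l <= 2 * M / c.
Proof.
  intros H.
  destruct primitive_cvg_pinfty as [lb [Hlb Hb]].
  { intros x Hx. rewrite <- (Rabs_right x) at 2 by lra. apply H. }
  destruct primitive_cvg_minfty as [la [Hla Ha]].
  { intros x Hx. replace (c * x) with (- c * Rabs x) by (rewrite Rabs_left1; lra). apply H. }
  assert (HdF : forall x, is_derive F x (f x)).
  { intros x. apply (is_derive_RInt f F 0); [|apply Hf].
    apply filter_forall. intros b. apply (RInt_correct (V := R_CompleteNormedModule)).
    apply ex_RInt_of_continuous. }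
  exists (lb - la). split.
  - apply is_RInt_gen_ext with (Derive F).
    + apply filter_forall. intros ab x _. apply is_derive_unique, HdF.
    + apply is_RInt_gen_Derive; auto.
      * apply filter_forall. intros ab x _. exists (f x). apply HdF.
      * apply filter_forall. intros ab x _. apply continuous_ext with f; [|apply Hf].
        intros t. symmetry. apply is_derive_unique, HdF.
  - pose proof (Rabs_triang lb (- la)) as Htri. rewrite Rabs_Ropp in Htri.
    replace (2 * M / c) with (M / c + M / c) by (field; lra). unfold Rminus. lra.
Qed.

End DecayingPrimitive.

Lemma abs_le_of_Derive_exp_bound (h : R -> R) (B beta : R) : 0 < beta ->
  (forall s, ex_derive h s) -> (forall s, continuous (Derive h) s) ->
  (forall s, 0 <= s -> Rabs (Derive h s) <= B * exp (- beta * s)) ->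
  filterlim h (Rbar_locally p_infty) (locally 0) ->
  forall y, 0 <= y -> Rabs (h y) <= B / beta * exp (- beta * y).
Proof.
  intros Hbeta Hd Hdc HB Hlim y Hy.
  rewrite <- (Rminus_0_r (h y)).
  apply (filterlim_abs_le (F := Rbar_locally p_infty) (fun s => h y - h s)).
  - exact (is_lim_minus' (fun _ => h y) h p_infty (h y) 0 (is_lim_const (h y) p_infty) Hlim).
  - exists y. intros s Hs.
    rewrite Rabs_minus_sym, <- (RInt_Derive h y s) by (intros; auto).
    apply abs_RInt_le_exp_right; auto; try lra. intros x Hx. apply HB. lra.
Qed.

(** * The potential [Q_om om ^ 4] *)

Definition q4 (A y : R) : R := 16 / (1 + A * cosh_ (2 * y)) ^ 2.

Lemma cosh_ge_1 (y : R) : 1 <= cosh_ y.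
Proof.
  unfold cosh_. pose proof (exp_pos y). rewrite exp_Ropp.
  assert (exp y + / exp y - 2 = (exp y - 1) ^ 2 / exp y) by (field; lra).
  assert (0 <= (exp y - 1) ^ 2 / exp y) by (apply Rdiv_le_0_compat; [apply pow2_ge_0 | lra]).
  lra.
Qed.

Lemma cosh_ge_exp_abs (y : R) : exp (Rabs y) / 2 <= cosh_ y.
Proof.
  unfold cosh_. pose proof (exp_pos y). pose proof (exp_pos (- y)).
  unfold Rabs; destruct Rcase_abs; lra.
Qed.

Lemma Q_om_pow4 (om y : R) : Q_om om y ^ 4 = q4 (a_om om) y.
Proof.
  unfold Q_om, q4.
  assert (HA : 0 <= a_om om) by apply sqrt_pos.
  pose proof (cosh_ge_1 (2 * y)).
  assert (Hd : 0 < 1 + a_om om * cosh_ (2 * y)) by nra.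
  replace 4%nat with (2 * 2)%nat by reflexivity. rewrite pow_mult, pow2_sqrt.
  - field. lra.
  - apply Rdiv_le_0_compat; lra.
Qed.

Section Profile.

Variable A : R.
Hypothesis HA : 1 <= A.

Let d y := 1 + A * cosh_ (2 * y).

Lemma q4_denom_inv_bound (y : R) : 0 < / d y <= 2 * exp (- (2) * Rabs y).
Proof.
  unfold d. pose proof (cosh_ge_1 (2 * y)). pose proof (cosh_ge_exp_abs (2 * y)).
  rewrite Rabs_mult, (Rabs_right 2) in * by lra.
  assert (Hinv : exp (- (2) * Rabs y) * exp (2 * Rabs y) = 1)
    by (rewrite <- exp_plus, <- exp_0; f_equal; ring).
  pose proof (exp_pos (- (2) * Rabs y)).
  assert (Hc : exp (2 * Rabs y) / 2 <= A * cosh_ (2 * y)) by nra.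
  split; [apply Rinv_0_lt_compat; nra|].
  apply Rmult_le_reg_r with (1 + A * cosh_ (2 * y)); [nra|].
  rewrite Rinv_l by nra.
  apply Rle_trans with (2 * exp (- (2) * Rabs y) * (exp (2 * Rabs y) / 2)); [lra|].
  apply Rmult_le_compat_l; lra.
Qed.

Lemma q4_eq_inv_sqr (y : R) : q4 A y = 16 * (/ d y) ^ 2.
Proof.
  unfold q4, d. pose proof (cosh_ge_1 (2 * y)).
  field. nra.
Qed.

Lemma q4_denom_inv_sqr_bound (y : R) : (/ d y) ^ 2 <= 4 * exp (- (4) * Rabs y).
Proof.
  destruct (q4_denom_inv_bound y) as [H0 H1].
  replace (- (4)) with (- (2 * 2)) by ring. rewrite <- exp_neg_abs_sqr.
  replace (4 * exp (- (2) * Rabs y) ^ 2) with ((2 * exp (- (2) * Rabs y)) ^ 2) by ring.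
  apply pow_incr. lra.
Qed.

Lemma q4_bound (y : R) : 0 <= q4 A y <= 64 * exp (- (4) * Rabs y).
Proof.
  rewrite q4_eq_inv_sqr. pose proof (q4_denom_inv_sqr_bound y). pose proof (pow2_ge_0 (/ d y)).
  split; lra.
Qed.

Lemma Derive_q4 (y : R) :
  Derive (q4 A) y = - 64 * A * ((exp (2 * y) - exp (- (2 * y))) / 2) * (/ d y) ^ 3.
Proof.
  apply is_derive_unique. unfold q4, d, cosh_.
  pose proof (exp_pos (2 * y)). pose proof (exp_pos (- (2 * y))).
  assert (0 < 1 + A * ((exp (2 * y) + exp (- (2 * y))) / 2)) by nra.
  auto_derive; [nra|]. field. lra.
Qed.

Lemma q4_Derive_bound (y : R) : Rabs (Derive (q4 A) y) <= 256 * exp (- (4) * Rabs y).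
Proof.
  rewrite Derive_q4. destruct (q4_denom_inv_bound y) as [H0 H1].
  assert (Hs : Rabs (A * ((exp (2 * y) - exp (- (2 * y))) / 2)) <= d y).
  { unfold d, cosh_. pose proof (exp_pos (2 * y)). pose proof (exp_pos (- (2 * y))).
    rewrite Rabs_mult, (Rabs_right A) by lra.
    assert (Rabs ((exp (2 * y) - exp (- (2 * y))) / 2) <= (exp (2 * y) + exp (- (2 * y))) / 2)
      by (unfold Rabs; destruct Rcase_abs; lra).
    assert (0 <= (exp (2 * y) + exp (- (2 * y))) / 2) by lra. nra. }
  assert (Hd1 : 1 <= d y) by (unfold d; pose proof (cosh_ge_1 (2 * y)); nra).
  assert (Hd : d y * / d y = 1) by (apply Rinv_r; lra).
  replace (- 64 * A * ((exp (2 * y) - exp (- (2 * y))) / 2) * (/ d y) ^ 3)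
    with (- (64 * (/ d y) ^ 2 * (A * ((exp (2 * y) - exp (- (2 * y))) / 2) * / d y))) by ring.
  set (s := A * ((exp (2 * y) - exp (- (2 * y))) / 2)) in *.
  assert (Hsd : Rabs (s * / d y) <= 1)
    by (rewrite Rabs_mult, (Rabs_right (/ d y)) by lra; nra).
  pose proof (q4_denom_inv_sqr_bound y) as Hsq.
  rewrite Rabs_Ropp, Rabs_mult, (Rabs_right (64 * (/ d y) ^ 2))
    by (apply Rle_ge, Rmult_le_pos; [lra | apply pow2_ge_0]).
  assert (0 <= (/ d y) ^ 2) by apply pow2_ge_0.
  apply Rle_trans with (64 * (/ d y) ^ 2 * 1); [apply Rmult_le_compat_l|]; lra.
Qed.

End Profile.

Lemma q4_sub_bound (A y : R) : 1 <= A ->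
  Rabs (q4 A y - q4 1 y) <= 128 * (A - 1) * exp (- (4) * Rabs y).
Proof.
  intros HA.
  destruct (q4_denom_inv_bound A HA y) as [Hu1 Hu1'].
  destruct (q4_denom_inv_bound 1 (Rle_refl 1) y) as [Hu0 Hu0'].
  rewrite !q4_eq_inv_sqr by lra. cbv beta in *.
  set (c := cosh_ (2 * y)) in *. pose proof (cosh_ge_1 (2 * y)) as Hc. fold c in Hc. clearbody c.
  set (u1 := / (1 + A * c)) in *. set (u0 := / (1 + 1 * c)) in *.
  assert (Hcu0 : c * u0 <= 1).
  { unfold u0. apply Rmult_le_reg_r with (1 + 1 * c); [lra|].
    rewrite Rmult_assoc, Rinv_l by lra. lra. }
  assert (Hdiff : u0 - u1 = (A - 1) * c * u0 * u1) by (unfold u0, u1; field; split; nra).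
  set (e := exp (- (2) * Rabs y)) in *. pose proof (exp_pos (- (2) * Rabs y)) as He. fold e in He.
  replace (- (4)) with (- (2 * 2)) by ring. rewrite <- exp_neg_abs_sqr. fold e.
  replace (16 * u1 ^ 2 - 16 * u0 ^ 2) with (- (16 * ((u0 - u1) * (u0 + u1)))) by ring.
  rewrite Rabs_Ropp, Hdiff, Rabs_right.
  2: { apply Rle_ge. repeat apply Rmult_le_pos; lra. }
  assert (H1 : (A - 1) * c * u0 * u1 * (u0 + u1) <= (A - 1) * (u1 * (u0 + u1))).
  { replace ((A - 1) * c * u0 * u1 * (u0 + u1)) with ((A - 1) * (u1 * (u0 + u1)) * (c * u0))
    by ring.
    rewrite <- (Rmult_1_r ((A - 1) * (u1 * (u0 + u1)))) at 2.
    apply Rmult_le_compat_l; [repeat apply Rmult_le_pos|]; lra. }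
  assert (H2 : u1 * (u0 + u1) <= 2 * e * (4 * e)) by (apply Rmult_le_compat; lra).
  assert (H3 : (A - 1) * (u1 * (u0 + u1)) <= (A - 1) * (8 * e ^ 2))
    by (apply Rmult_le_compat_l; [lra|]; simpl; lra).
  lra.
Qed.

Lemma smooth_q4 (A : R) : 0 <= A -> smooth (q4 A).
Proof.
  intros HA.
  assert (Hcosh : smooth (fun y => cosh_ (2 * y))).
  { apply smooth_ext with (fun y => / 2 * exp (2 * y) + / 2 * exp ((-2) * y)).
    - intros t. unfold cosh_. replace (- (2 * t)) with ((-2) * t) by ring. field.
    - apply smooth_plus; apply smooth_scal, smooth_exp_scal. }
  assert (Hd : smooth (fun y => 1 + A * cosh_ (2 * y)))
    by (apply smooth_plus; [apply smooth_const | apply smooth_scal, Hcosh]).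
  apply smooth_ext with (fun y => 16 * / ((1 + A * cosh_ (2 * y)) * (1 + A * cosh_ (2 * y)))).
  - intros t. unfold q4. unfold Rdiv. f_equal. f_equal. ring.
  - apply smooth_scal, smooth_inv; [apply smooth_mult; exact Hd|].
    intros y. pose proof (cosh_ge_1 (2 * y)). nra.
Qed.

Definition tanh_ (y : R) : R := 1 - 2 / (exp (2 * y) + 1).

Lemma is_derive_q4_1_primitive (y : R) :
  is_derive (fun y => 4 * tanh_ y - 4 / 3 * tanh_ y ^ 3) y (q4 1 y).
Proof.
  unfold tanh_, q4, cosh_. pose proof (exp_pos (2 * y)).
  auto_derive; [lra|]. rewrite exp_Ropp. field. repeat split; nra.
Qed.

Lemma tanh_cubic_sub_bound (t l : R) : Rabs t <= 1 -> Rabs l = 1 ->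
  Rabs ((4 * t - 4 / 3 * t ^ 3) - (4 * l - 4 / 3 * l ^ 3)) <= 8 * Rabs (t - l).
Proof.
  intros Ht Hl.
  replace ((4 * t - 4 / 3 * t ^ 3) - (4 * l - 4 / 3 * l ^ 3))
    with ((t - l) * (4 - 4 / 3 * (t * t + t * l + l * l))) by ring.
  rewrite Rabs_mult, Rmult_comm. apply Rmult_le_compat_r; [apply Rabs_pos|].
  assert (Rabs (t * t + t * l + l * l) <= 3).
  { eapply Rle_trans; [apply Rabs_triang|].
    eapply Rle_trans; [apply Rplus_le_compat_r, Rabs_triang|].
    rewrite !Rabs_mult, Hl. pose proof (Rabs_pos t). nra. }
  eapply Rle_trans; [apply Rabs_triang|].
  rewrite Rabs_Ropp, Rabs_mult, (Rabs_right 4), (Rabs_right (4 / 3)) by lra. lra.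
Qed.

Lemma is_RInt_gen_q4_1 : is_RInt_gen (q4 1) (Rbar_locally m_infty) (Rbar_locally p_infty) (16 / 3).
Proof.
  set (F := fun y => 4 * tanh_ y - 4 / 3 * tanh_ y ^ 3).
  assert (Htanh : forall y, Rabs (tanh_ y) <= 1).
  { intros y. unfold tanh_. pose proof (exp_pos (2 * y)).
    assert (0 <= 2 / (exp (2 * y) + 1) <= 2)
      by (split; [apply Rdiv_le_0_compat | apply Rle_div_l]; lra).
    unfold Rabs; destruct Rcase_abs; lra. }
  apply is_RInt_gen_ext with (Derive F).
  { apply filter_forall. intros ab x _. apply is_derive_unique, is_derive_q4_1_primitive. }
  replace (16 / 3) with (8 / 3 - - (8 / 3)) by field.
  apply is_RInt_gen_Derive.
  - apply filter_forall. intros ab x _. eexists. apply is_derive_q4_1_primitive.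
  - apply filter_forall. intros ab x _. apply continuous_ext with (q4 1).
    + intros t. symmetry. apply is_derive_unique, is_derive_q4_1_primitive.
    + apply (smooth_continuous (q4 1) 0), smooth_q4. lra.
  - apply (filterlim_minfty_of_exp_bound F _ 16 2); [lra|]. intros y Hy.
    replace (- (8 / 3)) with (4 * (-1) - 4 / 3 * (-1) ^ 3) by field.
    eapply Rle_trans; [apply tanh_cubic_sub_bound; auto; rewrite Rabs_left; lra|].
    unfold tanh_. pose proof (exp_pos (2 * y)).
    replace (1 - 2 / (exp (2 * y) + 1) - -1) with (2 * exp (2 * y) / (exp (2 * y) + 1))
      by (field; lra).
    rewrite Rabs_right by (apply Rle_ge, Rdiv_le_0_compat; lra).
    assert (2 * exp (2 * y) / (exp (2 * y) + 1) <= 2 * exp (2 * y)) by (apply Rle_div_l; nra).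
    lra.
  - apply (filterlim_pinfty_of_exp_bound F _ 16 2); [lra|]. intros y Hy.
    replace (8 / 3) with (4 * 1 - 4 / 3 * 1 ^ 3) by field.
    eapply Rle_trans; [apply tanh_cubic_sub_bound; auto; apply Rabs_R1|].
    unfold tanh_. pose proof (exp_pos (2 * y)). pose proof (exp_pos (- (2) * y)).
    assert (Hinv : exp (- (2) * y) * exp (2 * y) = 1)
      by (rewrite <- exp_plus, <- exp_0; f_equal; ring).
    replace (1 - 2 / (exp (2 * y) + 1) - 1) with (- (2 / (exp (2 * y) + 1))) by ring.
    rewrite Rabs_Ropp, Rabs_right by (apply Rle_ge, Rdiv_le_0_compat; lra).
    assert (2 / (exp (2 * y) + 1) <= 2 * exp (- (2) * y)) by (apply Rle_div_l; nra).
    lra.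
Qed.

Lemma a_om_bounds (om : R) : 0 <= om -> 1 <= a_om om <= 1 + 8 / 3 * om.
Proof.
  intros Hom. unfold a_om. split.
  - rewrite <- sqrt_1 at 1. apply sqrt_le_1_alt. lra.
  - rewrite <- (sqrt_pow2 (1 + 8 / 3 * om)) by lra. apply sqrt_le_1_alt. nra.
Qed.

(** * [K0] from the intertwining relation *)

Section Intertwining.

Variables (om : R) (W2 K2 K1 K0 : R -> R).
Hypotheses (HW2 : smooth W2) (HW2nz : forall y, W2 y <> 0).
Hypothesis Hint : forall f : R -> R, smooth f -> forall y : R,
  Uop W2 (M_plus_op om (M_minus_op om f)) y = Kop K2 K1 K0 (Uop W2 f) y.

Let q := q4 (a_om om).

Let w := log_deriv W2.

Let Hq : smooth q.
Proof. apply smooth_q4, sqrt_pos. Qed.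

Definition M_plus_minus_one (t : R) : R :=
  om * Derive_n q 2 t + (1 - om * q t) + om / 3 * q t * (1 - om * q t).

Lemma M_minus_op_one (t : R) : M_minus_op om (fun _ => 1) t = 1 + (- om) * q t.
Proof.
  unfold M_minus_op. rewrite (Derive_n_const 1). unfold q. rewrite Q_om_pow4. ring.
Qed.

Lemma M_plus_minus_op_one (t : R) :
  M_plus_op om (M_minus_op om (fun _ => 1)) t = M_plus_minus_one t.
Proof.
  unfold M_plus_op. rewrite (Derive_n_ext _ _ _ _ M_minus_op_one), M_minus_op_one.
  rewrite (Derive_n_affine 1 (- om) q 1). unfold M_plus_minus_one, q.
  rewrite Q_om_pow4. ring.
Qed.

Lemma M_plus_minus_op_id (t : R) :
  M_plus_op om (M_minus_op om (fun y => y)) t = t * M_plus_minus_one t + 2 * om * Derive q t.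
Proof.
  assert (Hid : forall y, M_minus_op om (fun y => y) y = y * (1 + (- om) * q y)).
  { intros y. unfold M_minus_op.
    replace (Derive_n (fun y => y) 2 y) with 0
      by (simpl; rewrite (Derive_ext _ (fun _ => 1))
        by apply Derive_id; symmetry; apply Derive_const).
    unfold q. rewrite Q_om_pow4. ring. }
  unfold M_plus_op. rewrite (Derive_n_ext _ _ _ _ Hid), Hid.
  rewrite (Derive_n_id_mult _ 1)
    by (apply smooth_plus; [apply smooth_const | apply smooth_scal, Hq]).
  rewrite (Derive_n_affine 1 (- om) q 1), (Derive_n_affine 1 (- om) q 0).
  unfold M_plus_minus_one, q. rewrite Q_om_pow4. simpl (INR 2).
  change (Derive_n (q4 (a_om om)) 1 t) with (Derive (q4 (a_om om)) t). ring.
Qed.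

Let Hw : smooth w.
Proof. apply smooth_log_deriv; auto. Qed.

Lemma intertwining_one (y : R) :
  Derive M_plus_minus_one y - w y * M_plus_minus_one y
  = - (Derive_n w 4 y - 2 * Derive_n w 2 y + K2 y * Derive_n w 2 y
       + K1 y * Derive w y + K0 y * w y + w y).
Proof.
  assert (HU : forall t, Uop W2 (fun _ => 1) t = - w t)
    by (intros t; unfold Uop, w, log_deriv; rewrite Derive_const; ring).
  pose proof (Hint (fun _ => 1) (smooth_const 1) y) as E.
  unfold Uop at 1 in E. rewrite (Derive_ext _ _ _ M_plus_minus_op_one), M_plus_minus_op_one in E.
  unfold Kop in E. rewrite !(Derive_n_ext _ _ _ _ HU), (Derive_ext _ _ _ HU), HU in E.
  rewrite !Derive_n_opp, Derive_opp in E.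
  change (Derive W2 y / W2 y) with (w y) in E. rewrite E. ring.
Qed.

Lemma intertwining_id (y : R) :
  M_plus_minus_one y + y * Derive M_plus_minus_one y + 2 * om * Derive_n q 2 y
  - w y * (y * M_plus_minus_one y + 2 * om * Derive q y)
  = - (y * Derive_n w 4 y + 4 * Derive_n w 3 y) + 2 * (y * Derive_n w 2 y + 2 * Derive w y)
    - K2 y * (y * Derive_n w 2 y + 2 * Derive w y) - K1 y * (y * Derive w y + w y)
    + K0 y * (1 - y * w y) + 1 - y * w y.
Proof.
  assert (HsL : smooth M_plus_minus_one).
  { unfold M_plus_minus_one.
    assert (Hm : smooth (fun t => 1 - om * q t))
      by (apply smooth_ext with (fun t => 1 + (- om) * q t); [intros; ring|];
          apply smooth_plus; [apply smooth_const | apply smooth_scal, Hq]).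
    apply smooth_plus; [apply smooth_plus; [apply smooth_scal, smooth_Derive_n, Hq | exact Hm]|].
    apply (smooth_mult (fun t => om / 3 * q t)); [apply smooth_scal, Hq | exact Hm]. }
  set (Lid := fun t => t * M_plus_minus_one t + 2 * om * Derive q t).
  assert (HLid : Derive Lid y = M_plus_minus_one y + y * Derive M_plus_minus_one y
                                + 2 * om * Derive_n q 2 y).
  { unfold Lid. rewrite Derive_plus, Derive_mult, Derive_scal, Derive_id.
    - change (Derive (Derive q) y) with (Derive_n q 2 y). ring.
    - apply ex_derive_id.
    - apply (HsL 0%nat).
    - apply ex_derive_mult; [apply ex_derive_id | apply (HsL 0%nat)].
    - apply ex_derive_scal, (Hq 1%nat). }
  assert (HU : forall t, Uop W2 (fun y => y) t = 1 + (-1) * (t * w t))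
    by (intros t; unfold Uop, w, log_deriv; rewrite Derive_id; ring).
  assert (HUL : Uop W2 (M_plus_op om (M_minus_op om (fun y => y))) y = Derive Lid y - w y * Lid y).
  { unfold Uop.
    f_equal; [apply Derive_ext, M_plus_minus_op_id | f_equal; apply M_plus_minus_op_id]. }
  pose proof (Hint (fun y => y) smooth_id y) as E. rewrite HUL, HLid in E. unfold Lid in E.
  unfold Kop in E. rewrite !(Derive_n_ext _ _ _ _ HU), (Derive_ext _ _ _ HU), HU in E.
  change (Derive (fun t => 1 + -1 * (t * w t)) y)
    with (Derive_n (fun t => 1 + -1 * (t * w t)) 1 y) in E.
  rewrite !(Derive_n_affine 1 (-1) (fun t => t * w t)), !(Derive_n_id_mult w) in E by exact Hw.
  simpl (INR _) in E. change (Derive_n w 1 y) with (Derive w y) in E.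
  change (Derive_n w 0 y) with (w y) in E. rewrite E. ring.
Qed.

Lemma K0_formula (y : R) :
  K0 y = 3 * om * Derive_n q 2 y - 2 * om / 3 * q y - om ^ 2 / 3 * q y ^ 2
         - 2 * om * w y * Derive q y + 4 * Derive_n w 3 y + 2 * (K2 y - 2) * Derive w y
         + K1 y * w y.
Proof.
  (* Subtract [y] times the relation at [f = 1] from the one at [f = y]: every term carrying
     a factor [y] cancels, and [K0] is left with coefficient [1]. *)
  pose proof (intertwining_one y) as E1. pose proof (intertwining_id y) as E2.
  assert (E3 := f_equal (fun t => y * t) E1). cbv beta in E3.
  unfold M_plus_minus_one in *. lra.
Qed.

End Intertwining.

(** * Estimates at a fixed small [om] *)

Definition Y0_primitive (om : R) (K2 K1 K0 w q : R -> R) (y : R) : R :=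
  / 2 * Derive K2 y - / 2 * K1 y - y * K0 y + 4 * Derive_n w 2 y - 4 * w y + 3 * om * Derive q y.

Lemma smooth_Y0_primitive (om : R) (K2 K1 K0 w q : R -> R) :
  smooth K2 -> smooth K1 -> smooth K0 -> smooth w -> smooth q ->
  smooth (Y0_primitive om K2 K1 K0 w q).
Proof.
  intros H2 H1 H0 Hw Hq. unfold Y0_primitive.
  apply (smooth_ext (fun y => / 2 * Derive K2 y + (- / 2) * K1 y + (-1) * (y * K0 y)
    + 4 * Derive_n w 2 y + (-4) * w y + (3 * om) * Derive q y)); [intros; ring|].
  apply smooth_plus; [|apply smooth_scal, smooth_Derive, Hq].
  apply smooth_plus; [|apply smooth_scal, Hw].
  apply smooth_plus; [|apply smooth_scal, smooth_Derive_n, Hw].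
  apply smooth_plus; [|apply smooth_scal, smooth_mult; [apply smooth_id | exact H0]].
  apply smooth_plus; apply smooth_scal; [apply smooth_Derive, H2 | exact H1].
Qed.

Lemma Derive_Y0_primitive (om : R) (K2 K1 K0 w q : R -> R) (y : R) :
  smooth K2 -> smooth K1 -> smooth K0 -> smooth w -> smooth q ->
  Derive (Y0_primitive om K2 K1 K0 w q) y
  = / 2 * Derive_n K2 2 y - / 2 * Derive K1 y - (K0 y + y * Derive K0 y)
    + 4 * Derive_n w 3 y - 4 * Derive w y + 3 * om * Derive_n q 2 y.
Proof.
  intros H2 H1 H0 Hw Hq. apply is_derive_unique. unfold Y0_primitive.
  assert (ex_derive (Derive K2) y) by apply (H2 1%nat).
  assert (ex_derive K1 y) by apply (H1 0%nat).
  assert (ex_derive K0 y) by apply (H0 0%nat).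
  assert (ex_derive (Derive_n w 2) y) by apply (Hw 2%nat).
  assert (ex_derive w y) by apply (Hw 0%nat).
  assert (ex_derive (Derive q) y) by apply (Hq 1%nat).
  auto_derive; [repeat split; auto|].
  change (Derive (fun x => Derive K2 x) y) with (Derive_n K2 2 y).
  change (Derive (fun x => K1 x) y) with (Derive K1 y).
  change (Derive (fun x => K0 x) y) with (Derive K0 y).
  change (Derive (fun x => Derive (fun x0 => Derive (fun x1 => w x1) x0) x) y)
    with (Derive_n w 3 y).
  change (Derive (fun x => w x) y) with (Derive w y).
  change (Derive (fun x => Derive q x) y) with (Derive_n q 2 y). ring.
Qed.

Definition Y0_remainder (om : R) (K2 K1 w q : R -> R) (y : R) : R :=
  - (2 * om / 3) * (q y - q4 1 y) - om ^ 2 / 3 * q y ^ 2 - 2 * om * w y * Derive q y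
  + 2 * K2 y * Derive w y + K1 y * w y.

Definition remainder_const (C0 C1 : R) : R :=
  1594 + 1536 * C1 + 2 * C0 * (65 + 2 * C0 + 2 * C1 ^ 2) + 3 * C0 * C1.

Set Implicit Arguments.

(* The hypotheses of [lemma6] at one fixed [om] (those used below), together with the
   smallness conditions [om <= 1/8] and [C 0 * om <= 1/8] ensured by the choice of [om1]. *)
Record spectral_data (om a : R) (C : nat -> R) (W1 W2 K2 K1 K0 : R -> R) : Prop := {
  om_pos : 0 < om;
  om_small : om <= 1 / 8;
  C0_om_small : C 0%nat * om <= 1 / 8;
  a_pos : 0 < a;
  a_close : Rabs (a - 8 / 9 * om) <= C 0%nat * om ^ 2;
  W1_smooth : smooth W1;
  W2_smooth : smooth W2;
  W2_even : forall y, W2 (- y) = W2 y;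
  W2_eq : forall y, M_minus_op om W2 y = (1 - a ^ 2) * W1 y;
  W2_Derive_n_bound : forall k y,
    Rabs (Derive_n W2 k y) <= C k * (om ^ k * exp (- a * Rabs y) + om * exp (- Rabs y));
  W_sub_Derive_n_bound : forall k y,
    Rabs (Derive_n (fun z => W1 z - W2 z) k y) <= C k * (om * exp (- sqrt (2 - a ^ 2) * Rabs y));
  W2_close : forall y,
    Rabs (W2 y - exp (- a * Rabs y)) <= C 0%nat * (om * exp (- a * Rabs y));
  K2_smooth : smooth K2;
  K1_smooth : smooth K1;
  K0_smooth : smooth K0;
  intertwining : forall f : R -> R, smooth f -> forall y : R,
    Uop W2 (M_plus_op om (M_minus_op om f)) y = Kop K2 K1 K0 (Uop W2 f) y;
  K_Derive_n_bound : forall k y,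
    Rabs (Derive_n K2 k y) <= C k * (om * exp (- (sqrt (2 - a ^ 2) - a) * Rabs y)) /\
    Rabs (Derive_n K1 k y) <= C k * (om * exp (- (sqrt (2 - a ^ 2) - a) * Rabs y)) /\
    Rabs (Derive_n K0 k y) <= C k * (om * exp (- (sqrt (2 - a ^ 2) - a) * Rabs y))
}.

Unset Implicit Arguments.

Section SpectralData.

Variables (om a : R) (C : nat -> R) (W1 W2 K2 K1 K0 : R -> R).
Hypothesis S : spectral_data om a C W1 W2 K2 K1 K0.

Local Notation C0 := (C 0%nat).
Local Notation C1 := (C 1%nat).
Local Notation kap := (sqrt (2 - a ^ 2)).

Lemma C0_nonneg : 0 <= C0.
Proof.
  apply (coef_nonneg_of_bound _ _ _ (W2_close S 0)).
  pose proof (om_pos S). pose proof (exp_pos (- a * Rabs 0)). nra.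
Qed.

Lemma C1_nonneg : 0 <= C1.
Proof.
  apply (coef_nonneg_of_bound _ _ _ (proj1 (K_Derive_n_bound S 1 0))).
  pose proof (om_pos S). pose proof (exp_pos (- (kap - a) * Rabs 0)). nra.
Qed.

Lemma a_kappa_bounds : a <= 2 * om /\ a <= 1 / 4 /\ 0 <= 1 - a ^ 2 <= 1 /\ 1 <= kap - a.
Proof.
  pose proof (om_pos S). pose proof (om_small S). pose proof (C0_om_small S).
  pose proof (a_pos S). pose proof (a_close S). pose proof C0_nonneg.
  assert (Ha : a <= 8 / 9 * om + C0 * om ^ 2) by (pose proof (Rle_abs (a - 8 / 9 * om)); lra).
  assert (Ha2 : a <= 2 * om) by nra.
  assert (Hk : 5 / 4 <= kap).
  { rewrite <- (sqrt_pow2 (5 / 4)) by lra. apply sqrt_le_1_alt. nra. }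
  repeat split; nra.
Qed.

Local Notation e y := (exp (- Rabs y)).
Local Notation ea y := (exp (- a * Rabs y)).

Lemma W2_between (y : R) : 7 / 8 * ea y <= W2 y <= 9 / 8 * ea y.
Proof.
  pose proof (W2_close S y) as H. pose proof (C0_om_small S). pose proof (exp_pos (- a * Rabs y)).
  assert (C0 * om * ea y <= 1 / 8 * ea y) by (apply Rmult_le_compat_r; lra).
  pose proof (proj1 (Rabs_le_between _ _) H) as Hb. lra.
Qed.

Lemma W2_pos (y : R) : 0 < W2 y.
Proof. pose proof (W2_between y). pose proof (exp_pos (- a * Rabs y)). lra. Qed.

Lemma W2_Derive_bound (y : R) : Rabs (Derive W2 y) <= 2 * C1 * om * ea y.
Proof.
  pose proof (W2_Derive_n_bound S 1 y) as H. rewrite pow_1 in H.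
  change (Derive_n W2 1 y) with (Derive W2 y) in H.
  pose proof (om_pos S). pose proof C1_nonneg. destruct a_kappa_bounds as (_ & Ha & _).
  assert (e y <= ea y) by (replace (- Rabs y) with (- (1) * Rabs y)
    by ring; apply exp_neg_abs_le; lra).
  assert (C1 * (om * ea y + om * e y) <= C1 * (2 * om * ea y)) by (apply Rmult_le_compat_l; nra).
  lra.
Qed.

Lemma exp_kappa_split (y : R) : exp (- kap * Rabs y) <= e y * ea y.
Proof.
  destruct a_kappa_bounds as (_ & _ & _ & Hk). rewrite <- exp_plus.
  apply exp_le. pose proof (Rabs_pos y). nra.
Qed.

Lemma W_sub_bound (y : R) : Rabs (W2 y - W1 y) <= C0 * om * e y * ea y.
Proof.
  pose proof (W_sub_Derive_n_bound S 0 y) as H. change (Derive_n _ 0 y) with (W1 y - W2 y) in H.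
  rewrite Rabs_minus_sym.
  pose proof (om_pos S). pose proof C0_nonneg. pose proof (exp_kappa_split y) as Hk.
  eapply Rle_trans; [exact H|]. rewrite <- !Rmult_assoc, (Rmult_assoc (C0 * om)).
  apply Rmult_le_compat_l; [nra | exact Hk].
Qed.

Lemma W_sub_Derive_bound (y : R) : Rabs (Derive W1 y - Derive W2 y) <= C1 * om * e y * ea y.
Proof.
  pose proof (W_sub_Derive_n_bound S 1 y) as H.
  change (Derive_n _ 1 y) with (Derive (fun z => W1 z - W2 z) y) in H.
  rewrite Derive_minus in H by (apply (W1_smooth S 0%nat) || apply (W2_smooth S 0%nat)).
  pose proof (om_pos S). pose proof C1_nonneg. pose proof (exp_kappa_split y) as Hk.
  eapply Rle_trans; [exact H|]. rewrite <- !Rmult_assoc, (Rmult_assoc (C1 * om)).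
  apply Rmult_le_compat_l; [nra | exact Hk].
Qed.

Lemma K_bounds (y : R) :
  Rabs (K2 y) <= C0 * om * e y /\ Rabs (K1 y) <= C0 * om * e y /\
  Rabs (K0 y) <= C0 * om * e y /\ Rabs (Derive K2 y) <= C1 * om * e y.
Proof.
  destruct (K_Derive_n_bound S 0 y) as (H2 & H1 & H0).
  destruct (K_Derive_n_bound S 1 y) as (H2' & _).
  change (Derive_n ?f 0 y) with (f y) in H2, H1, H0.
  change (Derive_n K2 1 y) with (Derive K2 y) in H2'.
  pose proof (om_pos S). pose proof C0_nonneg. pose proof C1_nonneg.
  destruct a_kappa_bounds as (_ & _ & _ & Hk).
  assert (Hek : exp (- (kap - a) * Rabs y) <= e y)
    by (replace (- Rabs y) with (- (1) * Rabs y) by ring; apply exp_neg_abs_le; lra).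
  assert (HC0 : C0 * (om * exp (- (kap - a) * Rabs y)) <= C0 * om * e y)
    by (rewrite <- Rmult_assoc; apply Rmult_le_compat_l; nra).
  assert (HC1 : C1 * (om * exp (- (kap - a) * Rabs y)) <= C1 * om * e y)
    by (rewrite <- Rmult_assoc; apply Rmult_le_compat_l; nra).
  repeat split; lra.
Qed.

Local Notation q := (q4 (a_om om)).

Lemma smooth_q : smooth q.
Proof. apply smooth_q4, sqrt_pos. Qed.

Lemma q_bounds (y : R) :
  0 <= q y <= 64 * exp (- (4) * Rabs y) /\
  Rabs (Derive q y) <= 256 * exp (- (4) * Rabs y) /\
  Rabs (q y - q4 1 y) <= 342 * om * exp (- (4) * Rabs y).
Proof.
  pose proof (om_pos S). destruct (a_om_bounds om) as [HA1 HA2]; [lra|].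
  split; [apply q4_bound, HA1|]. split; [apply q4_Derive_bound, HA1|].
  eapply Rle_trans; [apply q4_sub_bound, HA1|].
  apply Rmult_le_compat_r; [left; apply exp_pos | lra].
Qed.

Lemma W2_Derive_n_2 (y : R) : Derive_n W2 2 y = W2 y - om * q y * W2 y - (1 - a ^ 2) * W1 y.
Proof.
  pose proof (W2_eq S y) as H. unfold M_minus_op in H.
  rewrite Q_om_pow4 in H. lra.
Qed.

Local Notation w := (log_deriv W2).

Lemma smooth_w : smooth w.
Proof.
  apply smooth_log_deriv; [apply (W2_smooth S)|]. intros y. pose proof (W2_pos y). lra.
Qed.

Lemma w_bound (y : R) : Rabs (w y) <= 3 * C1 * om.
Proof.
  pose proof (W2_between y) as HW. pose proof (exp_pos (- a * Rabs y)) as Hea.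
  pose proof (Rabs_div_le _ _ _ _ Hea (proj1 HW) (W2_Derive_bound y)).
  pose proof (om_pos S). pose proof C1_nonneg. unfold log_deriv. nra.
Qed.

Lemma Derive_w (y : R) :
  Derive w y = 1 - om * q y - (1 - a ^ 2) * W1 y / W2 y - w y * w y.
Proof.
  pose proof (W2_pos y) as Hp. pose proof (W2_smooth S) as HW.
  unfold log_deriv, Rdiv at 1.
  rewrite (Derive_mult (Derive W2) (fun y => / W2 y)), Derive_inv.
  - change (Derive (Derive W2) y) with (Derive_n W2 2 y). rewrite W2_Derive_n_2. field. lra.
  - apply (HW 0%nat).
  - lra.
  - apply (HW 1%nat).
  - apply ex_derive_inv; [apply (HW 0%nat) | lra].
Qed.

Lemma Derive_w_riccati_bound (y : R) :
  Rabs (Derive w y - (a ^ 2 - w y * w y)) <= (2 * C0 + 64) * om * e y.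
Proof.
  rewrite Derive_w. pose proof (W2_between y) as HW. pose proof (W2_pos y).
  destruct (q_bounds y) as [Hq _]. pose proof (exp_pos (- a * Rabs y)) as Hea.
  destruct a_kappa_bounds as (_ & _ & Hlam & _). pose proof (om_pos S). pose proof C0_nonneg.
  pose proof (exp_neg_4abs_le y) as He4.
  replace (1 - om * q y - (1 - a ^ 2) * W1 y / W2 y - w y * w y - (a ^ 2 - w y * w y))
    with ((1 - a ^ 2) * ((W2 y - W1 y) / W2 y) - om * q y) by (field; lra).
  assert (Hd : Rabs ((W2 y - W1 y) / W2 y) <= 8 / 7 * (C0 * om * e y))
    by (apply (Rabs_div_le _ _ _ (ea y) Hea (proj1 HW)), W_sub_bound).
  eapply Rle_trans; [apply Rabs_triang|]. rewrite Rabs_Ropp, !Rabs_mult.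
  rewrite (Rabs_right (1 - a ^ 2)), (Rabs_right om), (Rabs_right (q y)) by lra.
  assert ((1 - a ^ 2) * Rabs ((W2 y - W1 y) / W2 y) <= 8 / 7 * (C0 * om * e y)).
  { apply Rle_trans with (1 * Rabs ((W2 y - W1 y) / W2 y)); [|lra].
    apply Rmult_le_compat_r; [apply Rabs_pos | lra]. }
  assert (om * q y <= om * (64 * e y)) by (apply Rmult_le_compat_l; lra).
  pose proof (exp_pos (- Rabs y)). assert (0 <= C0 * om * e y) by (apply Rmult_le_pos; nra).
  lra.
Qed.

Lemma Derive_w_bound (y : R) : Rabs (Derive w y) <= (65 + 2 * C0 + 2 * C1 ^ 2) * om.
Proof.
  pose proof (Derive_w_riccati_bound y) as He. pose proof (w_bound y) as Hw.
  pose proof (om_pos S). pose proof (om_small S). pose proof C0_nonneg. pose proof C1_nonneg.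
  destruct a_kappa_bounds as (Ha & _). pose proof (a_pos S).
  pose proof (exp_neg_abs_le_1 1 y ltac:(lra)) as He1.
  rewrite <- Ropp_mult_distr_l, Rmult_1_l in He1.
  pose proof (exp_pos (- Rabs y)).
  set (v := w y) in *. set (d := Derive w y) in *.
  assert (Hv2 : v * v <= 9 * C1 ^ 2 * om ^ 2).
  { pose proof (Rabs_pos v).
    assert (Hvv : v * v = Rabs v * Rabs v)
      by (rewrite <- Rabs_mult; symmetry; apply Rabs_right; apply Rle_ge, Rle_0_sqr).
    rewrite Hvv. nra. }
  assert (Y : Rabs (a ^ 2 - v * v) <= 4 * om ^ 2 + 9 * C1 ^ 2 * om ^ 2)
    by (assert (0 <= v * v) by nra; unfold Rabs; destruct Rcase_abs; nra).
  assert (Z : (2 * C0 + 64) * om * e y <= (2 * C0 + 64) * om)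
    by (rewrite <- (Rmult_1_r ((2 * C0 + 64) * om)) at 2; apply Rmult_le_compat_l; nra).
  pose proof (Rabs_triang (d - (a ^ 2 - v * v)) (a ^ 2 - v * v)) as Htri.
  replace (d - (a ^ 2 - v * v) + (a ^ 2 - v * v)) with d in Htri by ring.
  assert (4 * om ^ 2 <= om) by nra. assert (9 * C1 ^ 2 * om ^ 2 <= 2 * C1 ^ 2 * om) by nra.
  nra.
Qed.

Lemma Derive_n_w_2 (y : R) :
  Derive_n w 2 y = - om * Derive q y
    - (1 - a ^ 2) * (Derive W1 y * W2 y - W1 y * Derive W2 y) / W2 y ^ 2
    - 2 * w y * Derive w y.
Proof.
  pose proof (W2_pos y) as Hp.
  assert (E1 : ex_derive W1 y) by apply (W1_smooth S 0%nat).
  assert (E2 : ex_derive W2 y) by apply (W2_smooth S 0%nat).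
  assert (E3 : ex_derive q y) by apply (smooth_q 0%nat).
  assert (Ew : ex_derive w y) by apply (smooth_w 0%nat).
  change (Derive_n w 2 y) with (Derive (Derive w) y).
  rewrite (Derive_ext (Derive w) (fun t => 1 - om * q t - (1 - a ^ 2) * W1 t / W2 t - w t * w t))
    by apply Derive_w.
  apply is_derive_unique. auto_derive; [repeat split; auto; lra|].
  change (fun x => ?f x) with f. field. lra.
Qed.

Lemma W_wronskian_bound (y : R) :
  Rabs (Derive W1 y * W2 y - W1 y * Derive W2 y) <= 3 * C1 * om * e y * ea y * ea y.
Proof.
  pose proof (W2_between y) as HW. pose proof (W2_pos y).
  pose proof (W_sub_bound y) as D0. pose proof (W_sub_Derive_bound y) as D1.
  pose proof (W2_Derive_bound y) as Wd.
  pose proof (om_pos S). pose proof (C0_om_small S). pose proof C0_nonneg. pose proof C1_nonneg.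
  pose proof (exp_pos (- Rabs y)). pose proof (exp_pos (- a * Rabs y)).
  set (b := C1 * om * e y * ea y * ea y).
  assert (Hb : 0 <= b) by (unfold b; repeat apply Rmult_le_pos; lra).
  replace (Derive W1 y * W2 y - W1 y * Derive W2 y)
    with ((Derive W1 y - Derive W2 y) * W2 y + (W2 y - W1 y) * Derive W2 y) by ring.
  eapply Rle_trans; [apply Rabs_triang|]. rewrite !Rabs_mult, (Rabs_right (W2 y)) by lra.
  assert (A1 : Rabs (Derive W1 y - Derive W2 y) * W2 y <= 9 / 8 * b).
  { apply Rle_trans with ((C1 * om * e y * ea y) * (9 / 8 * ea y)); [|unfold b; lra].
    apply Rmult_le_compat; try lra. apply Rabs_pos. }
  assert (A2 : Rabs (W2 y - W1 y) * Rabs (Derive W2 y) <= 2 * (C0 * om) * b).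
  { apply Rle_trans with ((C0 * om * e y * ea y) * (2 * C1 * om * ea y)); [|unfold b; lra].
    apply Rmult_le_compat; try apply Rabs_pos; lra. }
  assert (2 * (C0 * om) * b <= 1 / 4 * b) by (apply Rmult_le_compat_r; lra).
  unfold b in *. lra.
Qed.

Lemma Derive_n_w_2_bound (y : R) :
  Rabs (Derive_n w 2 y + 2 * w y * Derive w y) <= (256 + 4 * C1) * om * e y.
Proof.
  rewrite Derive_n_w_2. pose proof (W2_between y) as HW. pose proof (W2_pos y).
  destruct (q_bounds y) as (_ & Hq' & _). pose proof (exp_pos (- a * Rabs y)) as Hea.
  destruct a_kappa_bounds as (_ & _ & Hlam & _). pose proof (om_pos S). pose proof C1_nonneg.
  pose proof (exp_neg_4abs_le y) as He4.
  set (N := Derive W1 y * W2 y - W1 y * Derive W2 y).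
  assert (HN1 : Rabs (N / W2 y) <= (8 / 7 * (3 * C1 * om * e y)) * ea y).
  { eapply Rle_trans;
      [exact (Rabs_div_le N _ (3 * C1 * om * e y * ea y) _ Hea (proj1 HW) (W_wronskian_bound y))|].
    right. ring. }
  pose proof (Rabs_div_le _ _ _ (ea y) Hea (proj1 HW) HN1) as HN2.
  replace (- om * Derive q y - (1 - a ^ 2) * N / W2 y ^ 2 - 2 * w y * Derive w y
           + 2 * w y * Derive w y)
    with (- (om * Derive q y) - (1 - a ^ 2) * (N / W2 y / W2 y)) by (field; lra).
  eapply Rle_trans; [apply Rabs_triang|]. rewrite !Rabs_Ropp, !Rabs_mult.
  rewrite (Rabs_right (1 - a ^ 2)), (Rabs_right om) by lra.
  assert (om * Rabs (Derive q y) <= 256 * om * e y) by nra.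
  assert ((1 - a ^ 2) * Rabs (N / W2 y / W2 y) <= 4 * C1 * om * e y).
  { apply Rle_trans with (1 * (8 / 7 * (8 / 7 * (3 * C1 * om * e y)))).
    - apply Rmult_le_compat; try lra. apply Rabs_pos.
    - pose proof (exp_pos (- Rabs y)). assert (0 <= C1 * om * e y) by (apply Rmult_le_pos; nra).
      lra. }
  lra.
Qed.

Lemma w_odd (y : R) : w (- y) = - w y.
Proof.
  pose proof (W2_even S) as Ev.
  assert (HD : Derive W2 (- y) = - Derive W2 y).
  { rewrite (Derive_ext W2 (fun z => W2 (- z))) by (intros; rewrite Ev; auto).
    apply is_derive_unique.
    assert (ex_derive W2 y) by apply (W2_smooth S 0%nat).
    auto_derive; rewrite Ropp_involutive; auto. change (fun x => W2 x) with W2. ring. }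
  unfold log_deriv. rewrite HD, Ev. field. pose proof (W2_pos y). lra.
Qed.


(* [damped s = e^(-a s) W2 s (w s + a)]; in its derivative [e^(-a s) (W2'' - a^2 W2)]
   the leading exponentials cancel, leaving only [W2 - W1] and [om q W2]. *)

Let damped (s : R) : R := exp (- a * s) * (Derive W2 s + a * W2 s).

Lemma smooth_damped : smooth damped.
Proof.
  pose proof (W2_smooth S) as HW2.
  apply smooth_mult; [apply smooth_exp_scal|].
  apply smooth_plus; [apply smooth_Derive, HW2 | apply smooth_scal, HW2].
Qed.

Lemma Derive_damped (s : R) :
  Derive damped s = exp (- a * s) * ((1 - a ^ 2) * (W2 s - W1 s) - om * q s * W2 s).
Proof.
  pose proof (W2_smooth S) as HW2. apply is_derive_unique. unfold damped.
  assert (ex_derive (Derive W2) s) by apply (HW2 1%nat).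
  assert (ex_derive W2 s) by apply (HW2 0%nat).
  auto_derive; [auto|]. change (fun x => ?f x) with f.
  change (Derive (Derive W2) s) with (Derive_n W2 2 s). rewrite W2_Derive_n_2. ring.
Qed.

Lemma Derive_damped_bound (s : R) : 0 <= s ->
  Rabs (Derive damped s) <= om * (C0 + 72) * exp (- (2 * a + 1) * s).
Proof.
  intros Hs. rewrite Derive_damped.
  destruct a_kappa_bounds as (_ & _ & Hlam & _). pose proof (om_pos S). pose proof C0_nonneg.
  pose proof (W_sub_bound s) as D0. pose proof (W2_between s) as HW. pose proof (W2_pos s).
  destruct (q_bounds s) as [Hq _].
  rewrite (Rabs_right s) in D0, HW, Hq by lra.
  set (ea := exp (- a * s)) in *. set (e1 := exp (- s)) in *.
  pose proof (exp_pos (- a * s)). pose proof (exp_pos (- s)).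
  assert (E4 : exp (- (4) * s) * ea * ea <= exp (- (2 * a + 1) * s)).
  { unfold ea. rewrite <- !exp_plus. apply exp_le. pose proof (a_pos S). nra. }
  assert (E1 : e1 * ea * ea = exp (- (2 * a + 1) * s)).
  { unfold e1, ea. rewrite <- !exp_plus. f_equal. ring. }
  assert (T1 : Rabs ((1 - a ^ 2) * (W2 s - W1 s)) <= C0 * om * e1 * ea).
  { rewrite Rabs_mult, Rabs_right by lra.
    apply Rle_trans with (1 * Rabs (W2 s - W1 s)); [|lra].
    apply Rmult_le_compat_r; [apply Rabs_pos | lra]. }
  assert (T2 : Rabs (om * q s * W2 s) <= om * (64 * exp (- (4) * s)) * (9 / 8 * ea)).
  { rewrite Rabs_right by (apply Rle_ge, Rmult_le_pos; [apply Rmult_le_pos|]; lra).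
    apply Rmult_le_compat; [nra | lra | apply Rmult_le_compat_l; lra | lra]. }
  rewrite Rabs_mult, (Rabs_right ea) by lra.
  apply Rle_trans with (ea * (C0 * om * e1 * ea + om * (64 * exp (- (4) * s)) * (9 / 8 * ea))).
  - apply Rmult_le_compat_l; [lra|].
    eapply Rle_trans; [apply Rabs_triang|]. rewrite Rabs_Ropp. lra.
  - replace (ea * (C0 * om * e1 * ea + om * (64 * exp (- (4) * s)) * (9 / 8 * ea)))
      with (C0 * om * (e1 * ea * ea) + 72 * om * (exp (- (4) * s) * ea * ea)) by field.
    rewrite E1.
    assert (72 * om * (exp (- (4) * s) * ea * ea) <= 72 * om * exp (- (2 * a + 1) * s))
      by (apply Rmult_le_compat_l; lra).
    lra.
Qed.

Lemma damped_cvg_0 : filterlim damped (Rbar_locally p_infty) (locally 0).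
Proof.
  pose proof (a_pos S). pose proof (om_pos S). pose proof C1_nonneg.
  apply (filterlim_pinfty_of_exp_bound damped 0 (2 * C1 * om + 9 / 8 * a) (2 * a)); [lra|].
  intros s Hs. rewrite Rminus_0_r.
  pose proof (W2_Derive_bound s) as Wd. pose proof (W2_between s) as HW.
  rewrite (Rabs_right s) in Wd, HW by lra. pose proof (exp_pos (- a * s)).
  assert (Ee : exp (- a * s) * exp (- a * s) = exp (- (2 * a) * s))
    by (rewrite <- exp_plus; f_equal; ring).
  unfold damped. rewrite Rabs_mult, (Rabs_right (exp (- a * s))) by lra.
  assert (Rabs (Derive W2 s + a * W2 s) <= (2 * C1 * om + 9 / 8 * a) * exp (- a * s)).
  { eapply Rle_trans; [apply Rabs_triang|].
    rewrite Rabs_mult, (Rabs_right a), (Rabs_right (W2 s)) by lra. nra. }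
  rewrite <- Ee. nra.
Qed.

Lemma w_tail_pinfty : exists M, 0 <= M /\ forall y, 0 <= y -> Rabs (w y + a) <= M * exp (- y).
Proof.
  pose proof (a_pos S). pose proof (om_pos S). pose proof C0_nonneg.
  set (B := om * (C0 + 72)). set (beta := 2 * a + 1).
  pose proof (abs_le_of_Derive_exp_bound damped B beta ltac:(unfold beta; lra)
    (fun s => smooth_damped 0%nat s) (fun s => smooth_continuous damped 1 s smooth_damped)
    Derive_damped_bound damped_cvg_0) as Hc.
  exists (8 / 7 * (B / beta)). split.
  { unfold B, beta. apply Rmult_le_pos; [lra|]. apply Rdiv_le_0_compat; nra. }
  intros y Hy.
  pose proof (W2_between y) as HW. rewrite (Rabs_right y) in HW by lra.
  pose proof (W2_pos y). pose proof (exp_pos (- a * y)) as Hea.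
  assert (Hx : Derive W2 y + a * W2 y = exp (a * y) * damped y).
  { unfold damped. rewrite <- Rmult_assoc, <- exp_plus. replace (a * y + - a * y) with 0 by ring.
    rewrite exp_0. ring. }
  assert (Hb : Rabs (Derive W2 y + a * W2 y) <= (B / beta * exp (- y)) * exp (- a * y)).
  { rewrite Hx, Rabs_mult, (Rabs_right (exp (a * y))) by (apply Rle_ge; left; apply exp_pos).
    eapply Rle_trans; [apply Rmult_le_compat_l; [left; apply exp_pos | apply Hc, Hy]|].
    right. rewrite Rmult_assoc, (Rmult_comm (exp (a * y))), !Rmult_assoc, <- !exp_plus.
    f_equal. f_equal. unfold beta. ring. }
  replace (w y + a) with ((Derive W2 y + a * W2 y) / W2 y) by (unfold log_deriv; field; lra).
  rewrite Rmult_assoc. apply (Rabs_div_le _ _ _ _ Hea (proj1 HW) Hb).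
Qed.

Lemma w_tail_minfty : exists M, 0 <= M /\ forall y, y <= 0 -> Rabs (w y - a) <= M * exp y.
Proof.
  destruct w_tail_pinfty as [M [HM0 HM]]. exists M. split; [exact HM0|]. intros y Hy.
  specialize (HM (- y) ltac:(lra)). rewrite w_odd, Ropp_involutive in HM.
  replace (w y - a) with (- (- w y + a)) by ring. rewrite Rabs_Ropp. exact HM.
Qed.

Lemma w_Derive_tail (l Mw : R) : l * l = a * a -> 0 <= Mw ->
  exists M, 0 <= M /\ forall y, Rabs (w y - l) <= Mw * e y ->
    Rabs (Derive w y) <= M * e y /\ Rabs (Derive_n w 2 y) <= M * e y.
Proof.
  intros Hl HMw.
  pose proof (a_pos S). pose proof (om_pos S). pose proof C0_nonneg. pose proof C1_nonneg.
  set (M1 := (2 * C0 + 64) * om + (a + 3 * C1 * om) * Mw).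
  set (M2 := (256 + 4 * C1) * om + 6 * C1 * om * M1).
  assert (HM1 : 0 <= M1) by (unfold M1; apply Rplus_le_le_0_compat; apply Rmult_le_pos; nra).
  assert (HM2 : 0 <= M2)
    by (unfold M2; apply Rplus_le_le_0_compat; [|apply Rmult_le_pos; [|exact HM1]];
        apply Rmult_le_pos; lra).
  exists (M1 + M2). split; [lra|]. intros y Hwl.
  pose proof (exp_pos (- Rabs y)). pose proof (w_bound y) as Hw.
  assert (Hla : Rabs l = a).
  { assert (Rabs l * Rabs l = a * a) by (rewrite <- Rabs_mult, Hl; apply Rabs_right; nra).
    pose proof (Rabs_pos l). nra. }
  assert (Hw1 : Rabs (Derive w y) <= M1 * e y).
  { assert (X : Rabs (a ^ 2 - w y * w y) <= (a + 3 * C1 * om) * (Mw * e y)).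
    { replace (a ^ 2 - w y * w y) with ((l - w y) * (l + w y)) by (simpl; nra).
      rewrite Rabs_mult, Rmult_comm, Rabs_minus_sym.
      apply Rmult_le_compat; try apply Rabs_pos; [|exact Hwl].
      eapply Rle_trans; [apply Rabs_triang | lra]. }
    pose proof (Derive_w_riccati_bound y).
    pose proof (Rabs_triang (Derive w y - (a ^ 2 - w y * w y)) (a ^ 2 - w y * w y)) as Htri.
    replace (Derive w y - (a ^ 2 - w y * w y) + (a ^ 2 - w y * w y)) with (Derive w y) in Htri
      by ring.
    unfold M1. nra. }
  assert (Hw2 : Rabs (Derive_n w 2 y) <= M2 * e y).
  { pose proof (Derive_n_w_2_bound y).
    pose proof (Rabs_triang (Derive_n w 2 y + 2 * w y * Derive w y) (- (2 * w y * Derive w y)))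
      as Htri.
    replace (Derive_n w 2 y + 2 * w y * Derive w y + - (2 * w y * Derive w y)) with (Derive_n w 2 y)
      in Htri by ring.
    rewrite Rabs_Ropp, !Rabs_mult, (Rabs_right 2) in Htri by lra.
    assert (Rabs (w y) * Rabs (Derive w y) <= (3 * C1 * om) * (M1 * e y))
      by (apply Rmult_le_compat; try apply Rabs_pos; lra).
    unfold M2. nra. }
  split; nra.
Qed.

Local Notation G := (Y0_primitive om K2 K1 K0 w q).

Lemma Y0_primitive_tail (l Mw : R) : l * l = a * a -> 0 <= Mw ->
  exists M, forall y, Rabs (w y - l) <= Mw * e y -> Rabs (G y + 4 * l) <= M * exp (- / 2 * Rabs y).
Proof.
  intros Hl HMw. destruct (w_Derive_tail l Mw Hl HMw) as [M [HM Hw']].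
  pose proof (om_pos S). pose proof C0_nonneg. pose proof C1_nonneg.
  exists (/ 2 * C1 * om + / 2 * C0 * om + 2 * C0 * om + 4 * M + 4 * Mw + 768 * om).
  intros y Hwl. destruct (Hw' y Hwl) as [_ Hw2].
  destruct (K_bounds y) as (_ & HK1 & HK0 & HK2').
  destruct (q_bounds y) as (_ & Hq' & _).
  set (e2 := exp (- / 2 * Rabs y)).
  assert (Hee : e y <= e2) by (apply exp_le; pose proof (Rabs_pos y); lra).
  assert (He4 : exp (- (4) * Rabs y) <= e2) by (apply exp_le; pose proof (Rabs_pos y); lra).
  pose proof (exp_pos (- Rabs y)). pose proof (abs_mul_exp_neg_abs_le y) as Hye.
  assert (T0 : Rabs (y * K0 y) <= 2 * C0 * om * e2).
  { rewrite Rabs_mult. apply Rle_trans with (Rabs y * (C0 * om * e y)).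
    - apply Rmult_le_compat_l; [apply Rabs_pos | exact HK0].
    - replace (Rabs y * (C0 * om * e y)) with (C0 * om * (Rabs y * e y)) by ring.
      replace (2 * C0 * om * e2) with (C0 * om * (2 * e2)) by ring.
      apply Rmult_le_compat_l; [nra | exact Hye]. }
  assert (T1 : C0 * om * e y <= C0 * om * e2) by (apply Rmult_le_compat_l; nra).
  assert (T2 : C1 * om * e y <= C1 * om * e2) by (apply Rmult_le_compat_l; nra).
  assert (T3 : M * e y <= M * e2) by (apply Rmult_le_compat_l; lra).
  assert (T4 : Mw * e y <= Mw * e2) by (apply Rmult_le_compat_l; lra).
  assert (T5 : Rabs (om * Derive q y) <= 256 * om * e2).
  { rewrite Rabs_mult, Rabs_right by lra.
    replace (256 * om * e2) with (om * (256 * e2)) by ring. apply Rmult_le_compat_l; lra. }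
  apply Rabs_le_between in HK1, HK2', Hw2, Hwl, T0, T5.
  apply Rabs_le_between. unfold Y0_primitive. lra.
Qed.

Lemma Y0_primitive_lim_pinfty : filterlim G (Rbar_locally p_infty) (locally (4 * a)).
Proof.
  destruct w_tail_pinfty as [Mw [HMw0 HMw]].
  destruct (Y0_primitive_tail (- a) Mw ltac:(ring) HMw0) as [M HM].
  apply (filterlim_pinfty_of_exp_bound _ _ M (/ 2)); [lra|]. intros y Hy.
  replace (G y - 4 * a) with (G y + 4 * - a) by ring.
  replace (- / 2 * y) with (- / 2 * Rabs y) by (rewrite Rabs_right; lra).
  apply HM. rewrite (Rabs_right y) by lra. replace (w y - - a) with (w y + a) by ring. auto.
Qed.

Lemma Y0_primitive_lim_minfty : filterlim G (Rbar_locally m_infty) (locally (- (4 * a))).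
Proof.
  destruct w_tail_minfty as [Mw [HMw0 HMw]].
  destruct (Y0_primitive_tail a Mw eq_refl HMw0) as [M HM].
  apply (filterlim_minfty_of_exp_bound _ _ M (/ 2)); [lra|]. intros y Hy.
  replace (G y - - (4 * a)) with (G y + 4 * a) by ring.
  replace (/ 2 * y) with (- / 2 * Rabs y) by (rewrite Rabs_left1; lra).
  apply HM. rewrite (Rabs_left1 y), Ropp_involutive by lra. auto.
Qed.

Lemma smooth_G : smooth G.
Proof.
  apply smooth_Y0_primitive;
    [apply (K2_smooth S) | apply (K1_smooth S) | apply (K0_smooth S) | apply smooth_w
    | apply smooth_q].
Qed.

Lemma is_RInt_gen_Derive_Y0_primitive :
  is_RInt_gen (Derive G) (Rbar_locally m_infty) (Rbar_locally p_infty) (8 * a).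
Proof.
  replace (8 * a) with (4 * a - - (4 * a)) by ring.
  apply is_RInt_gen_Derive.
  - apply filter_forall. intros ab x _. apply (smooth_G 0%nat).
  - apply filter_forall. intros ab x _. apply (smooth_continuous G 1), smooth_G.
  - apply Y0_primitive_lim_minfty.
  - apply Y0_primitive_lim_pinfty.
Qed.

Local Notation Rem := (Y0_remainder om K2 K1 w q).

Lemma Y0_decomposition (y : R) :
  Y0 K2 K1 K0 y = Derive G y - 2 * om / 3 * q4 1 y + Rem y.
Proof.
  rewrite Derive_Y0_primitive
    by first [apply (K2_smooth S) | apply (K1_smooth S) | apply (K0_smooth S) | apply smooth_w
             | apply smooth_q].
  rewrite (K0_formula om W2 K2 K1 K0 (W2_smooth S)
             (fun y => Rgt_not_eq _ _ (W2_pos y)) (intertwining S) y).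
  unfold Y0, Y0_remainder. field.
Qed.

Lemma continuous_Y0_remainder (y : R) : continuous Rem y.
Proof.
  apply (ex_derive_continuous Rem). unfold Y0_remainder.
  assert (ex_derive q y) by apply (smooth_q 0%nat).
  assert (ex_derive (q4 1) y) by apply (smooth_q4 1 ltac:(lra) 0%nat).
  assert (ex_derive (Derive q) y) by apply (smooth_q 1%nat).
  assert (ex_derive w y) by apply (smooth_w 0%nat).
  assert (ex_derive (Derive w) y) by apply (smooth_w 1%nat).
  assert (ex_derive K2 y) by apply (K2_smooth S 0%nat).
  assert (ex_derive K1 y) by apply (K1_smooth S 0%nat).
  auto_derive. repeat split; auto.
Qed.

Lemma Y0_remainder_bound (y : R) :
  Rabs (Rem y) <= remainder_const C0 C1 * om ^ 2 * exp (- (1) * Rabs y).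
Proof.
  pose proof (om_pos S). pose proof C0_nonneg. pose proof C1_nonneg.
  destruct (q_bounds y) as (Hq & Hq' & Hqd).
  destruct (K_bounds y) as (HK2 & HK1 & _).
  pose proof (w_bound y) as Hw. pose proof (Derive_w_bound y) as Hw'.
  replace (- (1) * Rabs y) with (- Rabs y) by ring.
  pose proof (exp_neg_4abs_le y) as He4.
  assert (He1 : exp (- (4) * Rabs y) <= 1) by (apply exp_neg_abs_le_1; lra).
  pose proof (exp_pos (- Rabs y)). pose proof (exp_pos (- (4) * Rabs y)).
  assert (Hom : Rabs om <= om) by (rewrite Rabs_right; lra).
  assert (Hq1 : Rabs (q y) <= 64 * e y) by (rewrite Rabs_right; lra).
  assert (Hq2 : Rabs (q y) <= 64) by (rewrite Rabs_right; lra).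
  assert (Hqd' : Rabs (q y - q4 1 y) <= 342 * om * e y).
  { eapply Rle_trans; [exact Hqd|]. apply Rmult_le_compat_l; [lra | exact He4]. }
  assert (Hq'' : Rabs (Derive q y) <= 256 * e y) by lra.
  pose proof (Rabs_mult_le _ _ _ _ Hom Hqd') as T1.
  pose proof (Rabs_mult_le _ _ _ _ (Rabs_mult_le _ _ _ _ Hom Hom) (Rabs_mult_le _ _ _ _ Hq1 Hq2))
    as T2.
  pose proof (Rabs_mult_le _ _ _ _ (Rabs_mult_le _ _ _ _ Hom Hw) Hq'') as T3.
  pose proof (Rabs_mult_le _ _ _ _ HK2 Hw') as T4.
  pose proof (Rabs_mult_le _ _ _ _ HK1 Hw) as T5.
  apply Rabs_le_between in T1, T2, T3, T4, T5.
  apply Rabs_le_between. unfold Y0_remainder, remainder_const. simpl. lra.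
Qed.

Lemma Y0_integral_estimate :
  exists l, is_RInt_gen (Y0 K2 K1 K0) (Rbar_locally m_infty) (Rbar_locally p_infty) l /\
    Rabs (l - 32 / 9 * om) <= (8 * C0 + 2 * remainder_const C0 C1) * om ^ 2.
Proof.
  destruct (is_RInt_gen_of_exp_bound Rem (remainder_const C0 C1 * om ^ 2) 1 ltac:(lra)
    continuous_Y0_remainder Y0_remainder_bound) as [lR [HR HlR]].
  exists (8 * a - 2 * om / 3 * (16 / 3) + lR). split.
  - apply is_RInt_gen_ext
      with (fun y => plus (minus (Derive G y) (scal (2 * om / 3) (q4 1 y))) (Rem y)).
    + apply filter_forall. intros ab x _. rewrite Y0_decomposition. reflexivity.
    + apply (is_RInt_gen_plus (V := R_NormedModule)); [|exact HR].
      apply (is_RInt_gen_minus (V := R_NormedModule)); [apply is_RInt_gen_Derive_Y0_primitive|].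
      apply (is_RInt_gen_scal (V := R_NormedModule)), is_RInt_gen_q4_1.
  - pose proof (a_close S).
    replace (8 * a - 2 * om / 3 * (16 / 3) + lR - 32 / 9 * om) with (8 * (a - 8 / 9 * om) + lR)
      by field.
    eapply Rle_trans; [apply Rabs_triang|]. rewrite Rabs_mult, (Rabs_right 8) by lra.
    replace (2 * (remainder_const C0 C1 * om ^ 2) / 1)
      with (2 * remainder_const C0 C1 * om ^ 2) in HlR
      by field.
    lra.
Qed.

End SpectralData.

Theorem lemma6
  (om0 : R) (alpha : R -> R) (W1 W2 K2 K1 K0 : R -> R -> R) (C : nat -> R) :
  0 < om0 ->
  (* alpha smooth and positive, alpha = 8/9 om + O(om^2) *)
  smooth_on 0 om0 alpha ->
  (forall om, 0 < om < om0 -> 0 < alpha om) ->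
  (forall om, 0 < om < om0 -> Rabs (alpha om - 8 / 9 * om) <= C 0%nat * om ^ 2) ->
  (forall om, 0 < om < om0 ->
     let a := alpha om in
     let lam := 1 - a ^ 2 in
     let kap := sqrt (2 - a ^ 2) in
     (* W1, W2 smooth, real, even *)
     smooth (W1 om) /\ smooth (W2 om) /\
     (forall y : R, W1 om (- y) = W1 om y) /\ (forall y : R, W2 om (- y) = W2 om y) /\
     (* eigenvalue system *)
     (forall y : R, M_plus_op om (W1 om) y = lam * W2 om y) /\
     (forall y : R, M_minus_op om (W2 om) y = lam * W1 om y) /\
     (* bounds, constants independent of om and y *)
     (forall (k : nat) (y : R),
        Rabs (Derive_n (W1 om) k y) <= C k * (om ^ k * exp (- a * Rabs y) + om * exp (- Rabs y)) /\
        Rabs (Derive_n (W2 om) k y) <= C k * (om ^ k * exp (- a * Rabs y) + om * exp (- Rabs y))) /\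
     (forall (k : nat) (y : R),
        Rabs (Derive_n (fun z => W1 om z - W2 om z) k y) <= C k * (om * exp (- kap * Rabs y))) /\
     (forall y : R,
        Rabs (W1 om y - exp (- a * Rabs y)) <= C 0%nat * (om * exp (- a * Rabs y)) /\
        Rabs (W2 om y - exp (- a * Rabs y)) <= C 0%nat * (om * exp (- a * Rabs y))) /\
     (* K2, K1, K0 smooth, determined by U M_+ M_- = K U *)
     smooth (K2 om) /\ smooth (K1 om) /\ smooth (K0 om) /\
     (forall f : R -> R, smooth f -> forall y : R,
        Uop (W2 om) (M_plus_op om (M_minus_op om f)) y
        = Kop (K2 om) (K1 om) (K0 om) (Uop (W2 om) f) y) /\
     (forall (k : nat) (y : R),
        Rabs (Derive_n (K2 om) k y) <= C k * (om * exp (- (kap - a) * Rabs y)) /\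
        Rabs (Derive_n (K1 om) k y) <= C k * (om * exp (- (kap - a) * Rabs y)) /\
        Rabs (Derive_n (K0 om) k y) <= C k * (om * exp (- (kap - a) * Rabs y)))) ->
  exists om1 D : R, 0 < om1 /\
    forall om, 0 < om < om1 ->
      ex_RInt_gen (Y0 (K2 om) (K1 om) (K0 om))
                  (Rbar_locally m_infty) (Rbar_locally p_infty) /\
      Rabs (RInt_gen (Y0 (K2 om) (K1 om) (K0 om))
                     (Rbar_locally m_infty) (Rbar_locally p_infty) - 32 / 9 * om)
        <= D * om ^ 2.
Proof.
  intros Hom0 _ Hpos Hclose Hdata.
  set (d := / (8 * (1 + Rabs (C 0%nat)))).
  assert (Hd : 0 < d) by (apply Rinv_0_lt_compat; pose proof (Rabs_pos (C 0%nat)); lra).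
  exists (Rmin om0 d), (8 * C 0%nat + 2 * remainder_const (C 0%nat) (C 1%nat)).
  split; [apply Rmin_glb_lt; lra|]. intros om [Hom Hom1].
  pose proof (Rmin_l om0 d). pose proof (Rmin_r om0 d).
  assert (Hsmall : om <= 1 / 8 /\ C 0%nat * om <= 1 / 8).
  { pose proof (Rabs_pos (C 0%nat)). pose proof (Rle_abs (C 0%nat)).
    assert (d * (8 * (1 + Rabs (C 0%nat))) = 1) by (unfold d; field; lra). split; nra. }
  destruct (Hdata om ltac:(lra)) as (HW1 & HW2 & _ & HW2ev & _ & HW2eq & HWb & HWsub & HWclose & HK2
    & HK1 & HK0 & Hint & HKb).
  destruct (@Y0_integral_estimate om (alpha om) C (W1 om) (W2 om) (K2 om) (K1 om) (K0 om))
    as [l [Hl Hb]].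
  { constructor; auto; try lra.
    - apply Hpos. lra.
    - apply Hclose. lra.
    - intros k y. apply HWb.
    - intros y. apply HWclose. }
  split; [exists l; exact Hl|].
  rewrite (is_RInt_gen_unique _ l Hl). exact Hb.
Qed.
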